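(* Let $\mathcal X$ be the Hawaiian earring and let $g:[0,1]\to\mathcal X$ be the loop defined below. If $f:[0,1]\to\mathcal X$ is a loop with $f(0)=f(1)=0$ that is homotopic (rel endpoints) to $g$, then $|f^{-1}(0)|\ge c$; in particular $f$ is not a $c$-loop.
   Context: For $n\in\mathbb N=\{1,2,\dots\}$, $C_n=\{(x,y)\in\mathbb R^2: x^2+(y-\tfrac1n)^2=\tfrac1{n^2}\}$ (identified with $\{\tfrac1ne^{2\pi i\theta}+\tfrac in\}\subseteq\mathbb C$), and $\mathcal X=\bigcup_nC_n$, with base point $0$. For $n\in\mathbb N$, let $(c_n^1,d_n^1),\dots,(c_n^{2^{n-1}},d_n^{2^{n-1}})$ be the $2^{n-1}$ open intervals removed at the $n$-th stage of the middle-thirds construction of the Cantor set, listed from left to right (so $(c_1^1,d_1^1)=(\tfrac13,\tfrac23)$, $(c_2^1,d_2^1)=(\tfrac19,\tfrac29)$, $(c_2^2,d_2^2)=(\tfrac79,\tfrac89)$, ...), and enumerate all of them as $(a_k,b_k)$, $k\in\mathbb N$, by $(a_{2^{n-1}+i-1},b_{2^{n-1}+i-1})=(c_n^i,d_n^i)$ for $1\le i\le 2^{n-1}$. Define $g:[0,1]\to\mathcal X$ by $g(x)=\tfrac1ne^{2\pi i(\frac{x-a_n}{b_n-a_n}-\frac14)}+\tfrac in$ if $x\in(a_n,b_n)$ for some $n$, and $g(x)=0$ otherwise (so on $(a_n,b_n)$, $g$ runs once around $C_n$ starting and ending at $0$). $c$ is the cardinality of $\mathbb R$; a $c$-loop is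 a continuous loop all of whose fibres have cardinality $<c$. *)

From Stdlib Require Import Reals Lra Lia Classical ClassicalEpsilon.
Open Scope R_scope.

Definition pt : Type := (R * R)%type.
Definition origin : pt := (0, 0).

Definition dist2 (p q : pt) : R :=
  sqrt ((fst p - fst q) ^ 2 + (snd p - snd q) ^ 2).

Definition in_circle (n : nat) (p : pt) : Prop :=
  (fst p) ^ 2 + (snd p - / INR n) ^ 2 = (/ INR n) ^ 2.

Definition hawaiian (p : pt) : Prop :=
  exists n : nat, (1 <= n)%nat /\ in_circle n p.

Definition unit_I (x : R) : Prop := 0 <= x <= 1.

Definition cont_on_I (f : R -> pt) : Prop :=
  forall x, unit_I x -> forall eps, eps > 0 ->
    exists delta, delta > 0 /\
      forall y, unit_I y -> Rabs (y - x) < delta -> dist2 (f y) (f x) < eps.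

Definition cont_on_I2 (H : R -> R -> pt) : Prop :=
  forall s t, unit_I s -> unit_I t -> forall eps, eps > 0 ->
    exists delta, delta > 0 /\
      forall s' t', unit_I s' -> unit_I t' ->
        sqrt ((s' - s) ^ 2 + (t' - t) ^ 2) < delta ->
        dist2 (H s' t') (H s t) < eps.

Definition loop_in_X (f : R -> pt) : Prop :=
  cont_on_I f /\ (forall x, unit_I x -> hawaiian (f x)) /\
  f 0 = origin /\ f 1 = origin.

Definition homotopic_rel (f g : R -> pt) : Prop :=
  exists H : R -> R -> pt,
    cont_on_I2 H /\
    (forall s t, unit_I s -> unit_I t -> hawaiian (H s t)) /\
    (forall s, unit_I s -> H s 0 = f s) /\
    (forall s, unit_I s -> H s 1 = g s) /\
    (forall t, unit_I t -> H 0 t = f 0 /\ H 1 t = f 1).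

(* Cantor construction: left endpoint of the j-th (0-indexed, left to right)
   of the 2^m closed intervals of length 3^-m remaining after stage m. *)
Fixpoint cantor_left (m : nat) (j : nat) : R :=
  match m with
  | O => 0
  | S m' => cantor_left m' (Nat.div2 j) +
            (if Nat.odd j then 2 / 3 ^ (S m') else 0)
  end.

(* (c_n^i, d_n^i), n >= 1, 1 <= i <= 2^(n-1): middle third of the
   (i-1)-th interval of stage n-1. *)
Definition c_ni (n i : nat) : R := cantor_left (n - 1) (i - 1) + / 3 ^ n.
Definition d_ni (n i : nat) : R := cantor_left (n - 1) (i - 1) + 2 / 3 ^ n.

(* enumeration (a_k,b_k) = (c_n^i, d_n^i) where k = 2^(n-1) + i - 1,
   i.e. n = log2 k + 1 and i = k - 2^(n-1) + 1, for k >= 1 *)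
Definition stage_of (k : nat) : nat := S (Nat.log2 k).
Definition index_of (k : nat) : nat := S (k - 2 ^ Nat.log2 k).
Definition a_k (k : nat) : R := c_ni (stage_of k) (index_of k).
Definition b_k (k : nat) : R := d_ni (stage_of k) (index_of k).

Definition circ_pt (n : nat) (theta : R) : pt :=
  (/ INR n * cos (2 * PI * theta), / INR n * sin (2 * PI * theta) + / INR n).

Definition in_gap (x : R) (n : nat) : Prop :=
  (1 <= n)%nat /\ a_k n < x < b_k n.

Definition g_loop (x : R) : pt :=
  match excluded_middle_informative (exists n, in_gap x n) with
  | left H =>
      let n := proj1_sig (constructive_indefinite_description _ H) in
      circ_pt n ((x - a_k n) / (b_k n - a_k n) - / 4)
  | right _ => origin
  end.

Definition card_ge_c (A : R -> Prop) : Prop :=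
  exists h : R -> R, (forall r, A (h r)) /\
    (forall r1 r2, h r1 = h r2 -> r1 = r2).

Definition fibre (f : R -> pt) (p : pt) (x : R) : Prop := unit_I x /\ f x = p.

Definition c_loop (f : R -> pt) : Prop :=
  loop_in_X f /\ forall p, ~ card_ge_c (fibre f p).

(** A discrete version of the uniqueness of reduced words.  Fix [N] and cover
    the earring by the open stars of the graph made of [N] triangles
    [V0 - VR n - VL n - V0] glued at [V0], one for each circle [C_n], [n <= N];
    the star of [V0] contains the base point, the circles [C_n], [n > N], and
    the open lower halves of the others.  Sampling a loop on a fine grid gives
    a sequence of vertices, and cancelling its backtracks gives a stack (a
    reduced edge path).  Every little square of a sampled homotopy lies in the
    star of one edge, so the stacks of [f] and [g] agree.  The stack of [g] is
    explicit: crossing the gap of index [k <= N] pushes the triangle of [C_k].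
    So the stack of [f] goes through the same stages, and between reaching a
    stage and pushing the next triangle [f] moves from one circle to another,
    hence vanishes.  This attaches a zero of [f] to each point of the Cantor
    set; zeros attached to points separated by the gap [m] are at least
    [modulus m] apart independently of [N], and a [limsup] over [N] yields an
    injection of the Cantor set, hence of the reals, into the fibre of [f]
    over [0]. *)

From Stdlib Require Import Reals.
From Stdlib Require Import Lra Lia List Classical ClassicalEpsilon ZArith.
From Coquelicot Require Compactness.
Import ListNotations.
Close Scope R_scope.

Inductive vertex := V0 | VR (n : nat) | VL (n : nat).

Definition vertex_eq_dec (a b : vertex) : {a = b} + {a <> b}.
Proof. decide equality; apply Nat.eq_dec. Defined.

(* Appending a vertex to a reduced edge path, kept as a stack with the last
   vertex on top: staying at the top vertex changes nothing, stepping back to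
   the previous vertex cancels the last edge. *)
Definition push (S : list vertex) (v : vertex) : list vertex :=
  match S with
  | t :: r => if vertex_eq_dec v t then S else
      match r with
      | u :: r' => if vertex_eq_dec v u then r else v :: S
      | [] => v :: S
      end
  | [] => [v]
  end.

Fixpoint reduced (l : list vertex) : Prop :=
  match l with
  | a :: ((b :: r) as t) => a <> b /\ (match r with c :: _ => a <> c | [] => True end) /\ reduced t
  | _ => True
  end.

Lemma reduced_tail a l : reduced (a :: l) -> reduced l.
Proof. destruct l as [|b r]; simpl; tauto. Qed.

Lemma push_reduced S v : reduced S -> reduced (push S v).
Proof.
  intros H. destruct S as [|t r]; simpl. exact I.
  destruct (vertex_eq_dec v t). exact H.
  destruct r as [|u r'].
  - simpl; auto.
  - destruct (vertex_eq_dec v u). exact (reduced_tail _ _ H).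
    simpl in *. destruct r'; repeat split; tauto.
Qed.

Lemma push_top S v : exists r, push S v = v :: r.
Proof.
  destruct S as [|t r]; simpl. eauto.
  destruct (vertex_eq_dec v t). subst; eauto.
  destruct r as [|u r']. eauto.
  destruct (vertex_eq_dec v u). subst; eauto. eauto.
Qed.

Lemma push_top_id v r : push (v :: r) v = v :: r.
Proof. simpl. destruct (vertex_eq_dec v v); congruence. Qed.

Lemma push_there_and_back x r y : reduced (x :: r) -> push (push (x :: r) y) x = x :: r.
Proof.
  intros H. destruct (vertex_eq_dec y x) as [->|Hyx].
  - rewrite !push_top_id. reflexivity.
  - simpl. destruct (vertex_eq_dec y x); [congruence|].
    destruct r as [|u r'].
    + simpl. destruct (vertex_eq_dec x y); [congruence|].
      destruct (vertex_eq_dec x x); congruence.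
    + destruct (vertex_eq_dec y u) as [->|Hyu].
      * simpl. destruct (vertex_eq_dec x u). simpl in H; tauto.
        destruct r' as [|c r'']. reflexivity.
        destruct (vertex_eq_dec x c). simpl in H; tauto. reflexivity.
      * simpl. destruct (vertex_eq_dec x y); [congruence|].
        destruct (vertex_eq_dec x x); congruence.
Qed.

Lemma push_push_in_edge S x y z a b : reduced S -> (exists r, S = x :: r) ->
  (x = a \/ x = b) -> (y = a \/ y = b) -> (z = a \/ z = b) ->
  push (push S y) z = push S z.
Proof.
  intros HN [r ->] Hx Hy Hz.
  destruct (vertex_eq_dec y x) as [->|Hyx].
  - rewrite push_top_id. reflexivity.
  - assert (z = x \/ z = y) as [->| ->]
      by (destruct Hx, Hy, Hz; subst; try tauto; congruence).
    + rewrite push_there_and_back, push_top_id by exact HN. reflexivity.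
    + destruct (push_top (x :: r) y) as [r' E]. rewrite E, push_top_id. reflexivity.
Qed.

Fixpoint stack (w : nat -> vertex) (j : nat) : list vertex :=
  match j with
  | 0 => [w 0]
  | S j' => push (stack w j') (w (S j'))
  end.

Lemma stack_S w j : stack w (S j) = push (stack w j) (w (S j)).
Proof. reflexivity. Qed.

Lemma stack_reduced w j : reduced (stack w j).
Proof. induction j; simpl. exact I. apply push_reduced; auto. Qed.

Lemma stack_top w j : exists r, stack w j = w j :: r.
Proof. destruct j; simpl. eauto. apply push_top. Qed.

Lemma stack_top_vertex w j v r : stack w j = v :: r -> w j = v.
Proof. intros E. destruct (stack_top w j) as [r' E']. rewrite E in E'. now inversion E'. Qed.

Lemma stack_nonempty w j : stack w j <> [].
Proof. destruct (stack_top w j) as [r ->]. discriminate. Qed.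

Lemma stack_within_edge w p q a b : (p <= q)%nat ->
  (forall i, (p <= i <= q)%nat -> w i = a \/ w i = b) ->
  stack w q = push (stack w p) (w q).
Proof.
  intros Hpq Hab. induction q as [|q IH].
  - assert (p = 0%nat) by lia; subst.
    destruct (stack_top w 0) as [r E]. rewrite E, push_top_id; auto.
  - destruct (Nat.eq_dec p (S q)) as [->|Hne].
    + destruct (stack_top w (S q)) as [r E]. rewrite E, push_top_id; auto.
    + rewrite stack_S, IH by (lia || (intros; apply Hab; lia)).
      apply push_push_in_edge with (x := w p) (a := a) (b := b);
        auto using stack_reduced, stack_top; apply Hab; lia.
Qed.

Lemma stack_ext_from w w' n m : stack w n = stack w' n ->
  (forall i, (n < i <= m)%nat -> w i = w' i) -> (n <= m)%nat -> stack w m = stack w' m.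
Proof.
  intros H0 Hw Hnm. induction m as [|m IH].
  - assert (n = 0%nat) by lia; subst; auto.
  - destruct (Nat.eq_dec n (S m)) as [->|Hne]; auto.
    rewrite !stack_S, (Hw (S m)) by lia.
    rewrite IH; [reflexivity | intros; apply Hw; lia | lia].
Qed.

Definition edge_square (p q : nat -> vertex) (j : nat) : Prop :=
  exists a b, (p j = a \/ p j = b) /\ (p (S j) = a \/ p (S j) = b) /\
    (q j = a \/ q j = b) /\ (q (S j) = a \/ q (S j) = b).

Section Staircase.
Variables p q : nat -> vertex.

(* The path that follows [q] up to index [j] and then drops to [p] and
   follows it; [staircase j] and [staircase (S j)] differ by one square. *)
Definition staircase (j i : nat) : vertex := if (i <=? j)%nat then q i else p (i - 1).

Lemma stack_staircase_prefix i j : (i <= j)%nat -> stack (staircase j) i = stack q i.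
Proof.
  induction i; intros Hi; [reflexivity|].
  rewrite stack_S, IHi by lia. unfold staircase.
  replace (S i <=? j)%nat with true by (symmetry; apply Nat.leb_le; lia).
  reflexivity.
Qed.

Lemma stack_staircase_first i : p 0 = q 0 -> stack (staircase 0) (S i) = stack p i.
Proof.
  intros H0. induction i.
  - simpl. unfold staircase. simpl. rewrite H0. apply push_top_id.
  - rewrite stack_S, IHi. unfold staircase. simpl. now rewrite ?Nat.sub_0_r.
Qed.

Lemma stack_staircase_last M : p M = q M -> stack (staircase M) (S M) = stack q M.
Proof.
  intros HM. rewrite stack_S, stack_staircase_prefix by lia. unfold staircase.
  replace (S M <=? M)%nat with false by (symmetry; apply Nat.leb_gt; lia).
  replace (S M - 1)%nat with M by lia. rewrite HM.
  destruct (stack_top q M) as [r Er]. rewrite Er, push_top_id. reflexivity.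
Qed.

Lemma stack_staircase_step M j : (j < M)%nat -> edge_square p q j ->
  stack (staircase j) (S M) = stack (staircase (S j)) (S M).
Proof.
  intros Hj (a & b & Hp0 & Hp1 & Hq0 & Hq1).
  apply stack_ext_from with (n := S (S j)); [| | lia].
  - rewrite !stack_S, !stack_staircase_prefix by lia. unfold staircase.
    replace (S j <=? j)%nat with false by (symmetry; apply Nat.leb_gt; lia).
    replace (S (S j) <=? j)%nat with false by (symmetry; apply Nat.leb_gt; lia).
    replace (S j <=? S j)%nat with true by (symmetry; apply Nat.leb_le; lia).
    replace (S (S j) <=? S j)%nat with false by (symmetry; apply Nat.leb_gt; lia).
    replace (S j - 1)%nat with j by lia. replace (S (S j) - 1)%nat with (S j) by lia.
    rewrite (push_push_in_edge _ (q j) (p j) (p (S j)) a b),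
      (push_push_in_edge _ (q j) (q (S j)) (p (S j)) a b);
      auto using stack_reduced, stack_top.
  - intros i Hi. unfold staircase.
    replace (i <=? j)%nat with false by (symmetry; apply Nat.leb_gt; lia).
    replace (i <=? S j)%nat with false by (symmetry; apply Nat.leb_gt; lia). reflexivity.
Qed.

End Staircase.

Lemma stack_homotopy_invariance (p q : nat -> vertex) M :
  p 0 = q 0 -> p M = q M -> (forall j, (j < M)%nat -> edge_square p q j) ->
  stack p M = stack q M.
Proof.
  intros H0 HM Hsq.
  assert (Hj : forall j, (j <= M)%nat -> stack (staircase p q j) (S M) = stack p M).
  { induction j; intros Hj.
    - apply stack_staircase_first, H0.
    - rewrite <- stack_staircase_step, IHj by (auto; lia). reflexivity. }
  rewrite <- (Hj M), stack_staircase_last; auto.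
Qed.

Definition is_suffix (P S : list vertex) : Prop := exists X, S = X ++ P.

Lemma is_suffix_refl P : is_suffix P P.
Proof. exists []; reflexivity. Qed.

Lemma is_suffix_trans A B C : is_suffix A B -> is_suffix B C -> is_suffix A C.
Proof. intros [X ->] [Y ->]. exists (Y ++ X). rewrite app_assoc; reflexivity. Qed.

Lemma is_suffix_cons A a B : is_suffix A B -> is_suffix A (a :: B).
Proof. intros [X ->]. exists (a :: X). reflexivity. Qed.

Lemma is_suffix_length A B : is_suffix A B -> length A <= length B.
Proof. intros [X ->]. rewrite length_app. lia. Qed.

Lemma is_suffix_common A B S :
  is_suffix A S -> is_suffix B S -> length A <= length B -> is_suffix A B.
Proof.
  intros [X HX] [Y HY] Hl. rewrite HX in HY.
  apply app_eq_app in HY as [l' [[H1 H2]|[H1 H2]]].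
  - exists l'. exact H2.
  - subst A. rewrite length_app in Hl. destruct l'; simpl in Hl; [|lia].
    apply is_suffix_refl.
Qed.

Lemma is_suffix_length_eq A B : is_suffix A B -> length A = length B -> A = B.
Proof. intros [X ->] H. rewrite length_app in H. destruct X; simpl in *; [reflexivity|lia]. Qed.

Lemma is_suffix_head_unique a b P S : is_suffix (a :: P) S -> is_suffix (b :: P) S -> a = b.
Proof.
  intros H1 H2. assert (E : a :: P = b :: P).
  { apply is_suffix_length_eq; [apply (is_suffix_common _ _ S)|]; auto; simpl; lia. }
  now inversion E.
Qed.

(* A push changes the length of a stack by at most one, so every nonempty
   suffix of a stack occurred as the whole stack at an earlier time. *)
Lemma stack_passes_suffix w i P : is_suffix P (stack w i) -> P <> [] ->
  exists i', i' <= i /\ stack w i' = P.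
Proof.
  induction i as [|i IH]; intros [X HX] HP.
  - exists 0. split; [lia|]. simpl in HX. destruct X as [|x X']; auto.
    simpl in HX. inversion HX. destruct X', P; simpl in *; congruence.
  - destruct X as [|x X']. { exists (S i); split; [lia|]; auto. }
    assert (Hprev : is_suffix P (stack w i) -> exists i', i' <= S i /\ stack w i' = P).
    { intros Hs. destruct (IH Hs HP) as [i' [? ?]]. exists i'; split; [lia|auto]. }
    apply Hprev. rewrite stack_S in HX. unfold push in HX.
    destruct (stack w i) as [|t r].
    + simpl in HX. inversion HX. destruct X', P; simpl in *; congruence.
    + destruct (vertex_eq_dec (w (S i)) t). { exists (x :: X'); exact HX. }
      destruct r as [|u r'].
      * inversion HX. exists X'; assumption.
      * destruct (vertex_eq_dec (w (S i)) u).
        -- exists (t :: x :: X'); rewrite HX; reflexivity.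
        -- inversion HX. exists X'; assumption.
Qed.

Definition first_hit w P i := stack w i = P /\ forall i', i' < i -> stack w i' <> P.

Lemma first_hit_unique w P i i' : first_hit w P i -> first_hit w P i' -> i = i'.
Proof.
  intros [H1 H2] [H3 H4]. destruct (lt_eq_lt_dec i i') as [[Hl|He]|Hg]; auto.
  - exfalso. exact (H4 i Hl H1).
  - exfalso. exact (H2 i' Hg H3).
Qed.

Lemma first_hit_exists w i P : is_suffix P (stack w i) -> P <> [] ->
  exists i0, i0 <= i /\ first_hit w P i0.
Proof.
  intros H1 H2. destruct (stack_passes_suffix w i P H1 H2) as [i' [Hle He]].
  clear H1. induction i' as [i' IH] using lt_wf_ind.
  destruct (classic (exists i'', i'' < i' /\ stack w i'' = P)) as [[i'' [Hlt He']]|Hn].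
  - apply (IH i''); auto; lia.
  - exists i'. repeat split; auto. intros i'' Hi'' He'. apply Hn; eauto.
Qed.

Lemma first_hit_before w P Q i j :
  first_hit w P i -> stack w j = Q -> is_suffix P Q -> P <> [] -> i <= j.
Proof.
  intros [H1 H2] <- H4 H5. destruct (stack_passes_suffix w j P H4 H5) as [i' [Hle He]].
  destruct (le_lt_dec i i') as [|Hlt]; [lia|]. exfalso. exact (H2 i' Hlt He).
Qed.

Lemma first_hit_cons w a P' i : first_hit w (a :: P') i -> P' <> [] ->
  exists i1, i = S i1 /\ stack w i1 = P' /\ w i = a.
Proof.
  intros [H1 H2] HP. destruct i as [|i1].
  { exfalso. simpl in H1. inversion H1. subst. apply HP; reflexivity. }
  exists i1. split; auto. rewrite stack_S in H1. unfold push in H1.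
  destruct (stack w i1) as [|t r] eqn:E.
  - exfalso. inversion H1. subst. apply HP; reflexivity.
  - destruct (vertex_eq_dec (w (S i1)) t).
    + exfalso. apply (H2 i1); [lia|]. rewrite E; exact H1.
    + destruct r as [|u r'].
      * inversion H1; auto.
      * destruct (vertex_eq_dec (w (S i1)) u).
        -- exfalso. assert (Hs : is_suffix (a :: P') (stack w i1))
             by (rewrite E, H1; exists [t]; reflexivity).
           destruct (stack_passes_suffix w i1 _ Hs ltac:(congruence)) as [i' [Hle He]].
           apply (H2 i'); [lia|auto].
        -- inversion H1; auto.
Qed.

Open Scope R_scope.

Lemma dist2_sym p q : dist2 p q = dist2 q p.
Proof. unfold dist2. f_equal. ring. Qed.

Lemma dist2_ge_x p q : Rabs (fst p - fst q) <= dist2 p q.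
Proof.
  unfold dist2. rewrite <- sqrt_Rsqr_abs. apply sqrt_le_1_alt.
  unfold Rsqr. pose proof (pow2_ge_0 (snd p - snd q)). nra.
Qed.

Lemma dist2_ge_y p q : Rabs (snd p - snd q) <= dist2 p q.
Proof.
  unfold dist2. rewrite <- sqrt_Rsqr_abs. apply sqrt_le_1_alt.
  unfold Rsqr. pose proof (pow2_ge_0 (fst p - fst q)). nra.
Qed.

Lemma sqrt_sum_sq_le a b : sqrt (a^2 + b^2) <= Rabs a + Rabs b.
Proof.
  pose proof (Rabs_pos a); pose proof (Rabs_pos b).
  rewrite <- (sqrt_Rsqr (Rabs a + Rabs b)) by lra.
  apply sqrt_le_1_alt. unfold Rsqr.
  assert (a^2 = Rabs a * Rabs a) by (rewrite <- Rabs_mult, Rabs_right; [ring|nra]).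
  assert (b^2 = Rabs b * Rabs b) by (rewrite <- Rabs_mult, Rabs_right; [ring|nra]).
  nra.
Qed.

Lemma dist2_pos p q : 0 <= dist2 p q.
Proof. apply sqrt_pos. Qed.

Lemma dist2_eq0 p q : dist2 p q = 0 -> p = q.
Proof.
  intros H. pose proof (dist2_ge_x p q). pose proof (dist2_ge_y p q).
  destruct p as [a b], q as [c d]; simpl in *.
  assert (a = c) by (apply Rminus_diag_uniq, NNPP; intros C;
    apply (Rabs_no_R0 _ C); pose proof (Rabs_pos (a - c)); lra).
  assert (b = d) by (apply Rminus_diag_uniq, NNPP; intros C;
    apply (Rabs_no_R0 _ C); pose proof (Rabs_pos (b - d)); lra).
  subst; reflexivity.
Qed.

Lemma dist2_triangle p q r : dist2 p r <= dist2 p q + dist2 q r.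
Proof.
  unfold dist2. destruct p as [a b], q as [c d], r as [e f]; cbn [fst snd].
  set (u1 := a - c). set (u2 := b - d). set (v1 := c - e). set (v2 := d - f).
  replace (a - e) with (u1 + v1) by (unfold u1, v1; ring).
  replace (b - f) with (u2 + v2) by (unfold u2, v2; ring).
  pose proof (sqrt_pos (u1^2+u2^2)). pose proof (sqrt_pos (v1^2+v2^2)).
  rewrite <- (sqrt_Rsqr (sqrt (u1 ^ 2 + u2 ^ 2) + sqrt (v1 ^ 2 + v2 ^ 2))) by lra.
  apply sqrt_le_1_alt. unfold Rsqr.
  assert (HA : sqrt (u1^2+u2^2) * sqrt (u1^2+u2^2) = u1^2+u2^2) by (apply sqrt_sqrt; nra).
  assert (HB : sqrt (v1^2+v2^2) * sqrt (v1^2+v2^2) = v1^2+v2^2) by (apply sqrt_sqrt; nra).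
  assert (Cauchy_Schwarz : u1*v1 + u2*v2 <= sqrt (u1^2+u2^2) * sqrt (v1^2+v2^2)).
  { rewrite <- sqrt_mult by nra.
    destruct (Rle_dec (u1*v1+u2*v2) 0).
    { pose proof (sqrt_pos ((u1 ^ 2 + u2 ^ 2) * (v1 ^ 2 + v2 ^ 2))); lra. }
    rewrite <- (sqrt_Rsqr (u1*v1+u2*v2)) by lra. apply sqrt_le_1_alt. unfold Rsqr.
    pose proof (pow2_ge_0 (u1*v2 - u2*v1)). nra. }
  nra.
Qed.

Lemma INR_pos n : (1 <= n)%nat -> 0 < INR n.
Proof. intros. apply lt_0_INR. lia. Qed.

Lemma inv_INR_pos n : (1 <= n)%nat -> 0 < / INR n.
Proof. intros. apply Rinv_0_lt_compat, INR_pos; auto. Qed.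

Lemma in_circle_eq n p : in_circle n p -> (fst p)^2 + (snd p)^2 = 2 * snd p * / INR n.
Proof. unfold in_circle. intros. nra. Qed.

Lemma in_circle_bounds n p : (1 <= n)%nat -> in_circle n p ->
  0 <= snd p <= 2 * / INR n /\ (fst p)^2 <= (/INR n)^2.
Proof.
  intros Hn H. pose proof (in_circle_eq n p H). pose proof (inv_INR_pos n Hn).
  pose proof (pow2_ge_0 (fst p)). pose proof (pow2_ge_0 (snd p - / INR n)). split; [split|]; nra.
Qed.

Lemma in_circle_origin n : in_circle n origin.
Proof. unfold in_circle, origin; simpl. ring. Qed.

Lemma in_circle_y_pos n p : (1 <= n)%nat -> in_circle n p -> p <> origin -> 0 < snd p.
Proof.
  intros Hn H Hp. destruct (in_circle_bounds n p Hn H) as [[[Hy|Hy] _] _]; auto.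
  exfalso. apply Hp. pose proof (in_circle_eq n p H). rewrite <- Hy in H0.
  assert (fst p = 0) by nra. destruct p; simpl in *; subst; reflexivity.
Qed.

Lemma in_circle_unique n m p : (1 <= n)%nat -> (1 <= m)%nat ->
  in_circle n p -> in_circle m p -> p <> origin -> n = m.
Proof.
  intros Hn Hm H1 H2 Hp. pose proof (in_circle_y_pos n p Hn H1 Hp).
  pose proof (in_circle_eq n p H1). pose proof (in_circle_eq m p H2).
  apply INR_eq, Rinv_eq_reg. nra.
Qed.

Lemma in_circle_index_bound n p c : (1 <= n)%nat -> in_circle n p -> 0 < c -> c <= snd p ->
  INR n <= 2 / c.
Proof.
  intros Hn Hc Hc0 Hy. destruct (in_circle_bounds n p Hn Hc) as [[_ Hy2] _].
  pose proof (INR_pos n Hn).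
  assert (2 * / INR n * INR n = 2) by (field; lra).
  apply (Rmult_le_reg_r c); auto. replace (2 / c * c) with 2 by (field; lra). nra.
Qed.

Lemma hawaiian_bounds p : hawaiian p -> Rabs (fst p) <= 1 /\ 0 <= snd p <= 2.
Proof.
  intros [n [Hn Hc]]. destruct (in_circle_bounds n p Hn Hc) as [[H1 H2] H3].
  assert (Hi : / INR n <= 1).
  { rewrite <- Rinv_1. apply Rinv_le_contravar; [lra|]. apply (le_INR 1); auto. }
  pose proof (inv_INR_pos n Hn).
  split; [|lra]. rewrite <- (Rabs_right 1) by lra. apply Rsqr_le_abs_0. unfold Rsqr. nra.
Qed.

(* [VR n] is [C_n] without its closed lower-left quarter, [VL n] is [C_n]
   without its closed lower-right quarter. *)
Definition star (N : nat) (v : vertex) (p : pt) : Prop :=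
  match v with
  | V0 => p = origin \/ (exists n, (N < n)%nat /\ in_circle n p) \/
          (exists n, (1 <= n <= N)%nat /\ in_circle n p /\ snd p < / INR n)
  | VR n => (1 <= n <= N)%nat /\ in_circle n p /\ ~ (fst p <= 0 /\ snd p <= / INR n)
  | VL n => (1 <= n <= N)%nat /\ in_circle n p /\ ~ (0 <= fst p /\ snd p <= / INR n)
  end.

Lemma star_VR_not_origin N n p : star N (VR n) p -> p <> origin.
Proof.
  intros [Hn [Hc Hx]] ->. apply Hx. simpl. pose proof (inv_INR_pos n ltac:(lia)). lra.
Qed.

Lemma star_VL_not_origin N n p : star N (VL n) p -> p <> origin.
Proof.
  intros [Hn [Hc Hx]] ->. apply Hx. simpl. pose proof (inv_INR_pos n ltac:(lia)). lra.
Qed.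

Lemma star_origin N v : star N v origin -> v = V0.
Proof.
  destruct v; auto; intros H; exfalso.
  - exact (star_VR_not_origin N n origin H eq_refl).
  - exact (star_VL_not_origin N n origin H eq_refl).
Qed.

Lemma star_small_circle N n p v : (N < n)%nat -> in_circle n p -> star N v p -> v = V0.
Proof.
  intros Hn Hc Hs. destruct (classic (p = origin)) as [->|Hp]. { exact (star_origin N v Hs). }
  destruct v; auto; destruct Hs as [Hm [Hc' _]];
    assert (n = n0) by (apply (in_circle_unique n n0 p); auto; lia); lia.
Qed.

Lemma star_VR_VL_high N m p : star N (VR m) p -> star N (VL m) p -> snd p > / INR m.
Proof.
  intros [_ [_ H1]] [_ [_ H2]].
  destruct (Rle_dec (snd p) (/ INR m)); [|lra].
  exfalso. destruct (Rle_dec (fst p) 0); [apply H1|apply H2]; split; lra.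
Qed.

Lemma star_on_circle N k p v : (1 <= k <= N)%nat -> in_circle k p -> p <> origin ->
  star N v p ->
  (v = V0 /\ snd p < / INR k) \/ (v = VR k /\ ~ (fst p <= 0 /\ snd p <= / INR k)) \/
  (v = VL k /\ ~ (0 <= fst p /\ snd p <= / INR k)).
Proof.
  intros Hk Hc Hp Hs.
  assert (Huniq : forall m, (1 <= m)%nat -> in_circle m p -> m = k)
    by (intros m Hm Hcm; apply (in_circle_unique m k p); auto; lia).
  destruct v as [|m|m].
  - left. split; auto. destruct Hs as [H|[[m [Hm Hcm]]|[m [Hm [Hcm Hy]]]]]; [congruence| |].
    + assert (m = k) by (apply Huniq; auto; lia). lia.
    + assert (m = k) by (apply Huniq; auto; lia). subst; auto.
  - right; left. destruct Hs as [Hm [Hcm H]]. assert (m = k) by (apply Huniq; auto; lia).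
    subst; auto.
  - right; right. destruct Hs as [Hm [Hcm H]]. assert (m = k) by (apply Huniq; auto; lia).
    subst; auto.
Qed.

Lemma stars_through_point N p : hawaiian p ->
  exists a b, forall v, star N v p -> v = a \/ v = b.
Proof.
  intros [n [Hn Hc]].
  destruct (classic (p = origin)) as [->|Hp].
  { exists V0, V0. intros v Hv. left. apply (star_origin N v Hv). }
  destruct (le_lt_dec n N) as [HnN|HnN].
  2:{ exists V0, V0. intros v Hv. left. apply (star_small_circle N n p v HnN Hc Hv). }
  destruct (Rlt_dec (snd p) (/ INR n)) as [Hy|Hy]; [destruct (Rle_dec (fst p) 0) as [Hx|Hx]|].
  - exists V0, (VL n). intros v Hv.
    destruct (star_on_circle N n p v ltac:(lia) Hc Hp Hv) as [[? _]|[[? H]|[? _]]]; auto.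
    exfalso. apply H. lra.
  - exists V0, (VR n). intros v Hv.
    destruct (star_on_circle N n p v ltac:(lia) Hc Hp Hv) as [[? _]|[[? _]|[? H]]]; auto.
    exfalso. apply H. lra.
  - exists (VR n), (VL n). intros v Hv.
    destruct (star_on_circle N n p v ltac:(lia) Hc Hp Hv) as [[? H]|[[? _]|[? _]]]; auto.
    lra.
Qed.

Lemma circle_gap_bound r1 r2 xp yp xq yq l : 0 < r2 < r1 -> 0 < l ->
  xp^2 + yp^2 = 2*yp*r1 -> xq^2+yq^2 = 2*yq*r2 ->
  Rabs (xp - xq) < l -> Rabs (yp - yq) < l -> yq * (r1 - r2) <= 2*l*r1 + l^2.
Proof.
  intros Hr Hl Hp Hq Hx Hy.
  assert (Hxq : xq^2 <= r2^2) by (pose proof (pow2_ge_0 (yq - r2)); nra).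
  assert (Hyq : 0 <= yq <= 2*r2) by (pose proof (pow2_ge_0 xq); nra).
  apply Rabs_def2 in Hx. apply Rabs_def2 in Hy.
  assert (Hxq' : -r2 <= xq <= r2) by (destruct (Rle_dec 0 xq); split; nra).
  assert (E : 2*yq*(r1-r2) = 2*(xq*(xp-xq) + (yq - r1)*(yp-yq)) + ((xp-xq)^2+(yp-yq)^2))
    by nra.
  assert (xq*(xp-xq) <= r1 * l) by (destruct (Rle_dec 0 xq), (Rle_dec 0 (xp-xq)); nra).
  assert ((yq - r1)*(yp-yq) <= r1 * l)
    by (destruct (Rle_dec 0 (yq-r1)), (Rle_dec 0 (yp-yq)); nra).
  assert ((xp-xq)^2 <= l^2) by nra.
  assert ((yp-yq)^2 <= l^2) by nra.
  nra.
Qed.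

Lemma circles_apart_arith (K a b y L : R) : 1 <= K -> 1 <= a -> a + 1 <= b -> b <= 16*K ->
  y >= /(8*K) -> L = /(1024 * K^2) -> y*(/a - /b) <= 2*L/a + L^2 -> False.
Proof.
  intros HK Ha Hb HbK Hy HL H.
  assert (E: y*(/a - /b) * (a*b) = y*(b-a)) by (field; lra).
  assert (E2: (2*L/a + L^2)*(a*b) = 2*L*b + L^2*a*b) by (field; lra).
  assert (H2 : y*(b-a) <= 2*L*b + L^2*a*b).
  { rewrite <- E, <- E2. apply Rmult_le_compat_r; nra. }
  assert (HLK : L * (1024*K^2) = 1) by (rewrite HL; field; lra).
  assert (HyK : y * (8*K) >= 1).
  { assert (/(8*K) * (8*K) = 1) by (field; lra). nra. }
  assert (0 < L) by (rewrite HL; apply Rinv_0_lt_compat; nra).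
  assert (Hy0 : 0 < y) by (assert (0 < /(8*K)) by (apply Rinv_0_lt_compat; lra); lra).
  assert (H3 : y <= y*(b-a)) by nra.
  assert (H4 : 2*L*b <= 32*K*L) by nra.
  assert (H5 : L^2*a*b <= L^2*256*K^2) by (assert (a*b <= 256*K^2) by nra; nra).
  assert (H6 : L^2*256*K^2 = L/4) by nra.
  assert (H7 : 32*K*L * (8*K) = /4 * (L * (1024*K^2))) by field.
  assert (H8 : (L/4) * (8*K) <= /4) by nra.
  nra.
Qed.

Lemma circles_apart (K : R) a b p q : 1 <= K -> (1 <= a)%nat -> (a < b)%nat ->
  INR b <= 16 * K -> in_circle a p -> in_circle b q -> snd q >= /(8*K) ->
  Rabs (fst p - fst q) < /(1024*K^2) -> Rabs (snd p - snd q) < /(1024*K^2) -> False.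
Proof.
  intros HK Ha Hab HbK Hp Hq Hy Hx Hy'.
  assert (Hab' : INR a + 1 <= INR b) by (rewrite <- S_INR; apply le_INR; lia).
  pose proof (INR_pos a Ha).
  apply (circles_apart_arith K (INR a) (INR b) (snd q) (/(1024*K^2))); auto.
  - apply (le_INR 1); lia.
  - unfold Rdiv. apply (circle_gap_bound _ _ (fst p) (snd p) (fst q)); auto.
    + split; [apply Rinv_0_lt_compat; lra|]. apply Rinv_lt_contravar; nra.
    + apply Rinv_0_lt_compat; nra.
    + rewrite (in_circle_eq a p Hp). ring.
    + rewrite (in_circle_eq b q Hq). ring.
Qed.

Lemma near_points_same_circle K n z z' : 1 <= K -> (1 <= n)%nat -> in_circle n z ->
  /(4*K) <= snd z -> hawaiian z' -> dist2 z' z < /(1024*K^2) -> in_circle n z'.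
Proof.
  intros HK Hn Hc Hy [m [Hm Hcm]] Hd.
  assert (Dx : Rabs (fst z' - fst z) < /(1024*K^2))
    by (pose proof (dist2_ge_x z' z); lra).
  assert (Dy : Rabs (snd z' - snd z) < /(1024*K^2))
    by (pose proof (dist2_ge_y z' z); lra).
  assert (HL8 : /(1024*K^2) <= /(8*K)) by (apply Rinv_le_contravar; nra).
  assert (H8 : /(8*K) = /(4*K) - /(8*K)) by (field; lra).
  assert (H8pos : 0 < /(8*K)) by (apply Rinv_0_lt_compat; lra).
  assert (HnK : INR n <= 16 * K).
  { assert (2 / /(4*K) = 8*K) by (field; lra).
    pose proof (in_circle_index_bound n z (/(4*K)) Hn Hc ltac:(apply Rinv_0_lt_compat; lra) Hy).
    lra. }
  destruct (lt_eq_lt_dec m n) as [[Hlt| ->]|Hgt]; auto; exfalso.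
  - apply (circles_apart K m n z' z); auto; lra.
  - assert (Hy' : /(8*K) <= snd z') by (apply Rabs_def2 in Dy; lra).
    assert (2 / /(8*K) = 16*K) by (field; lra).
    pose proof (in_circle_index_bound m z' (/(8*K)) Hm Hcm ltac:(apply Rinv_0_lt_compat; lra) Hy').
    apply (circles_apart K n m z z'); auto; try rewrite Rabs_minus_sym; lra.
Qed.

Lemma near_top_above_center (r x y L y' : R) : 0 < L -> L <= r/1024 ->
  x^2 + y^2 = 2*y*r -> Rabs x <= L -> y >= r - L -> Rabs (y' - y) < L -> y' > r.
Proof.
  intros HL HLr Hc Hx Hy Hy'. apply Rabs_def2 in Hy'.
  assert (x^2 <= L^2) by (rewrite <- (Rabs_right L) in Hx by lra; apply Rsqr_le_abs_1 in Hx;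
                         unfold Rsqr in Hx; nra).
  assert (Hr : 0 < r) by lra.
  assert (Hy2 : y >= r/2) by lra.
  assert (y*(2*r - y) <= L^2) by nra.
  assert (2*r - y <= 2*L^2/r).
  { apply Rmult_le_reg_l with (r := y); [lra|].
    assert (r/2 * (2*L^2/r) = L^2) by (field; lra).
    assert (0 <= 2*L^2/r)
      by (unfold Rdiv; apply Rmult_le_pos; [nra|left; apply Rinv_0_lt_compat; lra]).
    nra. }
  assert (2*L^2/r <= L/512).
  { apply Rmult_le_reg_l with (r := r); [lra|].
    replace (r * (2*L^2/r)) with (2*L^2) by (field; lra). nra. }
  lra.
Qed.

Lemma star_near_circle_point N n z L : (1 <= n <= N)%nat -> in_circle n z -> 0 < L ->
  L <= / INR n / 1024 -> exists v, forall z', in_circle n z' ->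
  Rabs (fst z' - fst z) < L -> Rabs (snd z' - snd z) < L -> star N v z'.
Proof.
  intros Hn Hc HL HLr. destruct z as [x y]. cbn [fst snd].
  set (r := / INR n) in *.
  pose proof (in_circle_eq n _ Hc) as Hz. cbn [fst snd] in Hz. fold r in Hz.
  destruct (Rlt_dec y (r - L)) as [Hy1|Hy1]; [|destruct (Rlt_dec L x) as [Hx1|Hx1];
    [|destruct (Rlt_dec x (-L)) as [Hx2|Hx2]]].
  - exists V0. intros z' Hz' _ Hdy. right; right. exists n. apply Rabs_def2 in Hdy.
    repeat split; auto; lia || (fold r; lra).
  - exists (VR n). intros z' Hz' Hdx _. repeat split; auto; try lia.
    apply Rabs_def2 in Hdx. intros [? ?]. lra.
  - exists (VL n). intros z' Hz' Hdx _. repeat split; auto; try lia.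
    apply Rabs_def2 in Hdx. intros [? ?]. lra.
  - exists (VR n). intros z' Hz' _ Hdy. repeat split; auto; try lia.
    assert (snd z' > r).
    { apply (near_top_above_center r x y L); auto; try lra.
      unfold Rabs; destruct (Rcase_abs x); lra. }
    fold r. intros [? ?]. lra.
Qed.

Lemma star_lebesgue_number N : (1 <= N)%nat -> exists l, 0 < l /\
  forall z, hawaiian z -> exists v, forall z', hawaiian z' -> dist2 z' z < l -> star N v z'.
Proof.
  intros HN. set (K := INR N). assert (HK : 1 <= K) by (unfold K; apply (le_INR 1); lia).
  set (L := / (1024 * K^2)).
  assert (HL : 0 < L) by (unfold L; apply Rinv_0_lt_compat; nra).
  assert (HLK : L <= / K / 1024).
  { unfold L, Rdiv. rewrite <- Rinv_mult. apply Rinv_le_contravar; nra. }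
  assert (HiK : 0 < / K) by (apply Rinv_0_lt_compat; lra).
  exists L. split; auto.
  intros z [n [Hn Hc]].
  assert (Hnear : forall z', dist2 z' z < L ->
            Rabs (fst z' - fst z) < L /\ Rabs (snd z' - snd z) < L).
  { intros z' Hd. pose proof (dist2_ge_x z' z). pose proof (dist2_ge_y z' z). split; lra. }
  destruct (Rlt_dec (snd z) (/ (4 * K))) as [Hlow|Hhigh].
  - exists V0. intros z' [m [Hm Hcm]] Hd. destruct (Hnear z' Hd) as [_ Hdy].
    destruct (le_lt_dec m N) as [HmN|HmN]; [right; right|right; left; eauto].
    exists m. repeat split; auto.
    apply Rabs_def2 in Hdy. destruct (in_circle_bounds n z Hn Hc) as [[? _] _].
    assert (/ K <= / INR m) by (apply Rinv_le_contravar; [apply INR_pos|apply le_INR]; auto).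
    assert (/ (4*K) = /K / 4) by (field; lra). lra.
  - apply Rnot_lt_le in Hhigh.
    assert (Hsame : forall z', hawaiian z' -> dist2 z' z < L -> in_circle n z')
      by (intros; apply (near_points_same_circle K n z); auto).
    destruct (le_lt_dec n N) as [HnN|HnN].
    + assert (HLn : L <= / INR n / 1024).
      { assert (/ K <= / INR n) by (apply Rinv_le_contravar; [apply INR_pos|apply le_INR]; auto).
        lra. }
      destruct (star_near_circle_point N n z L ltac:(lia) Hc HL HLn) as [v Hv].
      exists v. intros z' Hz' Hd. destruct (Hnear z' Hd). auto.
    + exists V0. intros z' Hz' Hd. right; left. exists n. auto.
Qed.
Lemma pow3_pos m : 0 < 3 ^ m.
Proof. apply pow_lt; lra. Qed.

Lemma inv_pow3_pos m : 0 < / 3 ^ m.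
Proof. apply Rinv_0_lt_compat, pow3_pos. Qed.

Lemma inv_pow3_S m : / 3 ^ (S m) = / 3 ^ m / 3.
Proof. simpl. field. pose proof (pow3_pos m). lra. Qed.

Lemma two_div_pow3_S m : 2 / 3 ^ S m = 2 * (/ 3 ^ m / 3).
Proof. rewrite <- inv_pow3_S. unfold Rdiv. ring. Qed.

Lemma cantor_left_S m j : cantor_left (S m) j =
  cantor_left m (Nat.div2 j) + (if Nat.odd j then 2 / 3 ^ (S m) else 0).
Proof. reflexivity. Qed.

Lemma div2_lt_pow j m : (j < 2 ^ S m)%nat -> (Nat.div2 j < 2 ^ m)%nat.
Proof.
  intros H. rewrite Nat.pow_succ_r' in H.
  pose proof (Nat.div2_odd j). destruct (Nat.odd j); simpl in *; lia.
Qed.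

Lemma cantor_left_bounds m j : (j < 2 ^ m)%nat ->
  0 <= cantor_left m j /\ cantor_left m j + / 3 ^ m <= 1.
Proof.
  revert j. induction m as [|m IH]; intros j Hj; [simpl; lra|].
  rewrite cantor_left_S, two_div_pow3_S, inv_pow3_S.
  destruct (IH (Nat.div2 j) (div2_lt_pow j m Hj)) as [H1 H2].
  pose proof (inv_pow3_pos m). destruct (Nat.odd j); split; lra.
Qed.

Lemma cantor_left_nested m j : cantor_left m (Nat.div2 j) <= cantor_left (S m) j /\
  cantor_left (S m) j + / 3 ^ (S m) <= cantor_left m (Nat.div2 j) + / 3 ^ m.
Proof.
  rewrite cantor_left_S, two_div_pow3_S, inv_pow3_S. pose proof (inv_pow3_pos m).
  destruct (Nat.odd j); split; lra.
Qed.

Lemma cantor_left_separated m j j' : (j < j')%nat -> (j' < 2 ^ m)%nat ->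
  cantor_left m j + 2 / 3 ^ m <= cantor_left m j'.
Proof.
  revert j j'. induction m as [|m IH]; intros j j' Hjj' Hj'; [simpl in Hj'; lia|].
  rewrite !cantor_left_S, two_div_pow3_S. pose proof (inv_pow3_pos m).
  pose proof (Nat.div2_odd j) as Ej. pose proof (Nat.div2_odd j') as Ej'.
  destruct (Nat.eq_dec (Nat.div2 j) (Nat.div2 j')) as [Heq|Hne].
  - rewrite Heq. destruct (Nat.odd j), (Nat.odd j'); simpl in *; try lia; lra.
  - assert (Hle : (Nat.div2 j <= Nat.div2 j')%nat) by (apply Nat.div2_le_mono; lia).
    pose proof (IH (Nat.div2 j) (Nat.div2 j') ltac:(lia) (div2_lt_pow j' m Hj')).
    destruct (Nat.odd j), (Nat.odd j'); unfold Rdiv in *; lra.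
Qed.

Lemma cantor_left_triadic m j : exists c : nat, cantor_left m j = INR c / 3 ^ m.
Proof.
  revert j. induction m as [|m IH]; intros j; [exists 0%nat; simpl; lra|].
  rewrite cantor_left_S. destruct (IH (Nat.div2 j)) as [c ->].
  exists (3 * c + (if Nat.odd j then 2 else 0))%nat. rewrite plus_INR, mult_INR.
  simpl pow. destruct (Nat.odd j); simpl INR; field; pose proof (pow3_pos m); lra.
Qed.

Lemma cantor_left_ancestor d n j : cantor_left n (j / 2 ^ d) <= cantor_left (d + n) j /\
  cantor_left (d + n) j + / 3 ^ (d + n) <= cantor_left n (j / 2 ^ d) + / 3 ^ n.
Proof.
  revert j. induction d as [|d IH]; intros j.
  { rewrite Nat.pow_0_r, Nat.div_1_r. simpl plus. lra. }
  destruct (cantor_left_nested (d + n) j) as [H1 H2].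
  destruct (IH (Nat.div2 j)) as [H3 H4].
  replace (j / 2 ^ S d)%nat with (Nat.div2 j / 2 ^ d)%nat.
  2:{ rewrite Nat.div2_div, Nat.Div0.div_div, Nat.pow_succ_r'. reflexivity. }
  simpl plus. split; lra.
Qed.

(* Gap [k] is the middle third of the interval number [gap_pos k] (counting
   from 0) of stage [gap_stage k]. *)
Definition gap_stage (k : nat) := Nat.log2 k.
Definition gap_pos (k : nat) := (k - 2 ^ Nat.log2 k)%nat.

Lemma a_k_eq k : a_k k = cantor_left (gap_stage k) (gap_pos k) + / 3 ^ (S (gap_stage k)).
Proof.
  unfold a_k, c_ni, stage_of, index_of, gap_stage, gap_pos. simpl.
  rewrite !Nat.sub_0_r. reflexivity.
Qed.

Lemma b_k_eq k : b_k k = cantor_left (gap_stage k) (gap_pos k) + 2 / 3 ^ (S (gap_stage k)).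
Proof.
  unfold b_k, d_ni, stage_of, index_of, gap_stage, gap_pos. simpl.
  rewrite !Nat.sub_0_r. reflexivity.
Qed.

Lemma gap_stage_lt k : (1 <= k)%nat -> (gap_stage k < k)%nat.
Proof. intros Hk. unfold gap_stage. apply Nat.log2_lt_lin. lia. Qed.

Lemma gap_pos_lt k : (1 <= k)%nat -> (gap_pos k < 2 ^ gap_stage k)%nat.
Proof.
  intros Hk. unfold gap_pos, gap_stage. destruct (Nat.log2_spec k ltac:(lia)) as [H1 H2].
  rewrite Nat.pow_succ_r' in H2. lia.
Qed.

Lemma gap_index_decomp k : (1 <= k)%nat -> k = (2 ^ gap_stage k + gap_pos k)%nat.
Proof.
  intros Hk. unfold gap_pos, gap_stage. destruct (Nat.log2_spec k ltac:(lia)). lia.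
Qed.

Lemma a_k_lt_b_k k : a_k k < b_k k.
Proof. rewrite a_k_eq, b_k_eq. pose proof (inv_pow3_pos (S (gap_stage k))). unfold Rdiv. lra. Qed.

Lemma gap_in_parent k s : a_k k < s < b_k k ->
  cantor_left (gap_stage k) (gap_pos k) < s /\
  s < cantor_left (gap_stage k) (gap_pos k) + / 3 ^ (gap_stage k).
Proof.
  rewrite a_k_eq, b_k_eq, two_div_pow3_S, inv_pow3_S.
  pose proof (inv_pow3_pos (gap_stage k)). lra.
Qed.

Lemma gap_in_unit k : (1 <= k)%nat -> 0 <= a_k k /\ b_k k <= 1.
Proof.
  intros Hk. rewrite a_k_eq, b_k_eq, two_div_pow3_S, inv_pow3_S.
  destruct (cantor_left_bounds _ _ (gap_pos_lt k Hk)).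
  pose proof (inv_pow3_pos (gap_stage k)). unfold Rdiv. split; lra.
Qed.

Lemma cantor_interval_avoids_gap k d j s : (1 <= k)%nat ->
  (j < 2 ^ (d + S (gap_stage k)))%nat ->
  cantor_left (d + S (gap_stage k)) j <= s <=
    cantor_left (d + S (gap_stage k)) j + / 3 ^ (d + S (gap_stage k)) ->
  ~ (a_k k < s < b_k k).
Proof.
  intros Hk Hj Hs Hg. set (n := gap_stage k) in *. set (J := gap_pos k) in *.
  destruct (cantor_left_ancestor d (S n) j) as [H1 H2].
  set (j1 := (j / 2 ^ d)%nat) in *.
  assert (Hj1 : (j1 < 2 ^ S n)%nat).
  { apply Nat.Div0.div_lt_upper_bound. rewrite <- Nat.pow_add_r. exact Hj. }
  assert (Hs1 : cantor_left (S n) j1 <= s <= cantor_left (S n) j1 + / 3 ^ S n) by lra.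
  clear H1 H2 Hs.
  rewrite cantor_left_S, two_div_pow3_S, inv_pow3_S in Hs1.
  rewrite a_k_eq, b_k_eq, two_div_pow3_S, inv_pow3_S in Hg. fold n J in Hg.
  pose proof (inv_pow3_pos n).
  destruct (lt_eq_lt_dec (Nat.div2 j1) J) as [[Hlt|Heq]|Hgt].
  - pose proof (cantor_left_separated n _ _ Hlt (gap_pos_lt k Hk)).
    destruct (Nat.odd j1); unfold Rdiv in *; lra.
  - rewrite Heq in Hs1. destruct (Nat.odd j1); lra.
  - pose proof (cantor_left_separated n _ _ Hgt (div2_lt_pow j1 n Hj1)).
    destruct (Nat.odd j1); unfold Rdiv in *; lra.
Qed.

Lemma gaps_disjoint k k' s : (1 <= k)%nat -> (1 <= k')%nat ->
  a_k k < s < b_k k -> a_k k' < s < b_k k' -> k = k'.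
Proof.
  assert (Hdeeper : forall k1 k2, (1 <= k1)%nat -> (1 <= k2)%nat ->
            (gap_stage k1 < gap_stage k2)%nat ->
            a_k k1 < s < b_k k1 -> a_k k2 < s < b_k k2 -> False).
  { intros k1 k2 Hk1 Hk2 Hlt H H'. pose proof (gap_in_parent k2 s H').
    set (d := (gap_stage k2 - S (gap_stage k1))%nat).
    assert (Hd : (d + S (gap_stage k1))%nat = gap_stage k2) by (unfold d; lia).
    apply (cantor_interval_avoids_gap k1 d (gap_pos k2) s Hk1); auto; rewrite Hd;
      [apply gap_pos_lt|lra]; auto. }
  intros Hk Hk' H H'.
  destruct (lt_eq_lt_dec (gap_stage k) (gap_stage k')) as [[Hlt|Heq]|Hgt].
  - exfalso; eauto.
  - pose proof (gap_in_parent k s H). pose proof (gap_in_parent k' s H').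
    rewrite <- Heq in *. pose proof (inv_pow3_pos (gap_stage k)).
    destruct (lt_eq_lt_dec (gap_pos k) (gap_pos k')) as [[Hlt2|Heq2]|Hgt2].
    + pose proof (cantor_left_separated (gap_stage k) _ _ Hlt2
                    ltac:(rewrite Heq; apply gap_pos_lt; auto)).
      unfold Rdiv in *. lra.
    + rewrite (gap_index_decomp k Hk), (gap_index_decomp k' Hk'), Heq, Heq2. reflexivity.
    + pose proof (cantor_left_separated (gap_stage k) _ _ Hgt2 ltac:(apply gap_pos_lt; auto)).
      unfold Rdiv in *. lra.
  - exfalso; eauto.
Qed.

(* The stage-[m] interval chosen by the digits [be 0], ..., [be (m-1)]. *)
Fixpoint branch (be : nat -> bool) (m : nat) : nat :=
  match m with 0 => 0%nat | S m' => (2 * branch be m' + (if be m' then 1 else 0))%nat end.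

Lemma branch_lt be m : (branch be m < 2 ^ m)%nat.
Proof. induction m; simpl; [lia|]. destruct (be m); lia. Qed.

Lemma branch_div2 be m : Nat.div2 (branch be (S m)) = branch be m.
Proof.
  cbn [branch]. destruct (be m).
  - replace (2 * branch be m + 1)%nat with (S (2 * branch be m)) by lia.
    apply Nat.div2_succ_double.
  - rewrite Nat.add_0_r. apply Nat.div2_double.
Qed.

Lemma branch_odd be m : Nat.odd (branch be (S m)) = be m.
Proof.
  cbn [branch]. destruct (be m).
  - replace (2 * branch be m + 1)%nat with (S (2 * branch be m)) by lia.
    rewrite Nat.odd_succ, Nat.even_mul. reflexivity.
  - rewrite Nat.add_0_r, Nat.odd_mul. reflexivity.
Qed.

Lemma branch_ext be be' m : (forall i, (i < m)%nat -> be i = be' i) -> branch be m = branch be' m.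
Proof.
  induction m; intros H; simpl; auto.
  rewrite IHm by (intros; apply H; lia). rewrite H by lia. reflexivity.
Qed.

Definition branch_left (be : nat -> bool) (m : nat) : R := cantor_left m (branch be m).

Lemma branch_left_S be m :
  branch_left be (S m) = branch_left be m + (if be m then 2 / 3 ^ (S m) else 0).
Proof. unfold branch_left. rewrite cantor_left_S, branch_div2, branch_odd. reflexivity. Qed.

Lemma branch_left_mono be m d : branch_left be m <= branch_left be (d + m) /\
  branch_left be (d + m) + / 3 ^ (d + m) <= branch_left be m + / 3 ^ m.
Proof.
  induction d; simpl plus; [lra|].
  destruct (cantor_left_nested (d + m) (branch be (S (d + m)))) as [H1 H2].
  unfold branch_left in *. rewrite branch_div2 in H1, H2. lra.
Qed.

Lemma branch_left_bounds be m : 0 <= branch_left be m /\ branch_left be m + / 3 ^ m <= 1.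
Proof. apply cantor_left_bounds, branch_lt. Qed.

Definition branch_lefts (be : nat -> bool) (r : R) : Prop := exists m, r = branch_left be m.

Lemma branch_lefts_bound be : bound (branch_lefts be).
Proof.
  exists 1. intros r [m ->]. pose proof (branch_left_bounds be m). pose proof (inv_pow3_pos m).
  lra.
Qed.

Lemma branch_lefts_inhabited be : exists r, branch_lefts be r.
Proof. exists (branch_left be 0). exists 0%nat. reflexivity. Qed.

(* The point of the Cantor set with ternary digits [2 * be i]. *)
Definition cantor_point (be : nat -> bool) : R :=
  proj1_sig (completeness (branch_lefts be) (branch_lefts_bound be) (branch_lefts_inhabited be)).

Lemma cantor_point_bounds be m : branch_left be m <= cantor_point be <= branch_left be m + / 3 ^ m.
Proof.
  unfold cantor_point. destruct (completeness _ _ _) as [x [Hub Hlub]]. simpl. split.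
  - apply Hub. exists m; reflexivity.
  - apply Hlub. intros r [m' ->]. destruct (le_lt_dec m m') as [Hle|Hlt].
    + destruct (branch_left_mono be m (m' - m)) as [_ H].
      replace (m' - m + m)%nat with m' in H by lia. pose proof (inv_pow3_pos m'). lra.
    + destruct (branch_left_mono be m' (m - m')) as [H _].
      replace (m - m' + m')%nat with m in H by lia. pose proof (inv_pow3_pos m). lra.
Qed.

Lemma cantor_point_unit be : 0 <= cantor_point be <= 1.
Proof.
  pose proof (cantor_point_bounds be 0). pose proof (branch_left_bounds be 0).
  pose proof (inv_pow3_pos 0). lra.
Qed.

Lemma cantor_point_not_in_gap be k : (1 <= k)%nat -> ~ (a_k k < cantor_point be < b_k k).
Proof.
  intros Hk. apply (cantor_interval_avoids_gap k 0 (branch be (S (gap_stage k)))); auto.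
  - apply branch_lt.
  - exact (cantor_point_bounds be (S (gap_stage k))).
Qed.

Lemma gap_between_cantor_points be be' m0 : (forall i, (i < m0)%nat -> be i = be' i) ->
  be m0 = false -> be' m0 = true ->
  exists k, (1 <= k)%nat /\ cantor_point be <= a_k k /\ b_k k <= cantor_point be'.
Proof.
  intros Hag H0 H1. set (k := (2 ^ m0 + branch be m0)%nat). exists k.
  assert (Hk : (1 <= k)%nat) by (unfold k; pose proof (Nat.pow_nonzero 2 m0); lia).
  assert (Hlg : gap_stage k = m0).
  { unfold gap_stage, k. apply Nat.log2_unique; [lia|].
    pose proof (branch_lt be m0). rewrite Nat.pow_succ_r'. lia. }
  assert (HJ : gap_pos k = branch be m0) by (unfold gap_pos; fold (gap_stage k); rewrite Hlg; lia).
  split; auto. rewrite a_k_eq, b_k_eq, Hlg, HJ. split.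
  - pose proof (cantor_point_bounds be (S m0)) as Hb.
    rewrite branch_left_S, H0 in Hb. unfold branch_left in Hb. lra.
  - pose proof (cantor_point_bounds be' (S m0)) as Hb.
    rewrite branch_left_S, H1 in Hb. unfold branch_left in Hb.
    rewrite (branch_ext be be' m0 Hag). lra.
Qed.

Lemma endpoint_a_not_in_gap k k' : (1 <= k)%nat -> (1 <= k')%nat -> ~ (a_k k' < a_k k < b_k k').
Proof.
  intros Hk Hk' Hg. pose proof (a_k_lt_b_k k).
  set (e := Rmin (b_k k' - a_k k) (b_k k - a_k k)).
  assert (He : 0 < e) by (unfold e, Rmin; destruct (Rle_dec _ _); lra).
  assert (e <= b_k k' - a_k k) by apply Rmin_l.
  assert (e <= b_k k - a_k k) by apply Rmin_r.
  assert (k = k') by (apply (gaps_disjoint k k' (a_k k + e / 2)); auto; lra).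
  subst. lra.
Qed.

Lemma endpoint_b_not_in_gap k k' : (1 <= k)%nat -> (1 <= k')%nat -> ~ (a_k k' < b_k k < b_k k').
Proof.
  intros Hk Hk' Hg. pose proof (a_k_lt_b_k k).
  set (e := Rmin (b_k k - a_k k') (b_k k - a_k k)).
  assert (He : 0 < e) by (unfold e, Rmin; destruct (Rle_dec _ _); lra).
  assert (e <= b_k k - a_k k') by apply Rmin_l.
  assert (e <= b_k k - a_k k) by apply Rmin_r.
  assert (k = k') by (apply (gaps_disjoint k k' (b_k k - e / 2)); auto; lra).
  subst. lra.
Qed.

Lemma g_loop_in_gap k s : (1 <= k)%nat -> a_k k < s < b_k k ->
  g_loop s = circ_pt k ((s - a_k k) / (b_k k - a_k k) - / 4).
Proof.
  intros Hk Hs. unfold g_loop. destruct (excluded_middle_informative _) as [H|H].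
  - destruct (constructive_indefinite_description _ H) as [n [Hn Hg]]. simpl.
    assert (n = k) by (apply (gaps_disjoint n k s); auto). subst. reflexivity.
  - exfalso. apply H. exists k. split; auto.
Qed.

Lemma g_loop_off_gaps s : (forall k, (1 <= k)%nat -> ~ (a_k k < s < b_k k)) -> g_loop s = origin.
Proof.
  intros H. unfold g_loop. destruct (excluded_middle_informative _) as [[n [Hn Hg]]|_]; auto.
  exfalso. exact (H n Hn Hg).
Qed.

Lemma circ_pt_in_circle k th : in_circle k (circ_pt k th).
Proof.
  unfold in_circle, circ_pt; simpl.
  pose proof (sin2_cos2 (2 * PI * th)). unfold Rsqr in H. nra.
Qed.

Lemma circ_pt_shift k ph : circ_pt k (ph - / 4) =
  (/ INR k * sin (2 * PI * ph), / INR k * (1 - cos (2 * PI * ph))).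
Proof.
  unfold circ_pt. replace (2 * PI * (ph - / 4)) with (2 * PI * ph - PI / 2) by field.
  rewrite cos_minus, sin_minus, cos_PI2, sin_PI2. f_equal; ring.
Qed.

Lemma pair_neq_origin a b : a <> 0 \/ b <> 0 -> (a, b) <> origin.
Proof. intros [H|H] E; inversion E; auto. Qed.

(* Running around [C_k], [g] passes through the stars of [V0], [VR k], [VL k]
   and [V0] in this order. *)
Lemma star_circ_pt_first_quarter N k ph v : (1 <= k <= N)%nat -> 0 < ph < / 4 ->
  star N v (circ_pt k (ph - / 4)) -> v = V0 \/ v = VR k.
Proof.
  intros Hk Hph Hs. pose proof (circ_pt_in_circle k (ph - /4)) as Hc.
  rewrite circ_pt_shift in *. pose proof (inv_INR_pos k ltac:(lia)) as Hi.
  assert (Hsn : 0 < sin (2 * PI * ph)) by (apply sin_gt_0; pose proof PI_RGT_0; nra).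
  assert (Hcs : 0 < cos (2 * PI * ph)) by (apply cos_gt_0; pose proof PI_RGT_0; nra).
  apply (star_on_circle N k) in Hs; auto. 2:{ apply pair_neq_origin. left. nra. }
  simpl in Hs. destruct Hs as [[H _]|[[H _]|[H1 H2]]]; auto.
  exfalso. apply H2. split; nra.
Qed.

Lemma star_circ_pt_middle N k ph v : (1 <= k <= N)%nat -> / 4 <= ph <= 3 / 4 ->
  star N v (circ_pt k (ph - / 4)) -> v = VR k \/ v = VL k.
Proof.
  intros Hk Hph Hs. pose proof (circ_pt_in_circle k (ph - /4)) as Hc.
  rewrite circ_pt_shift in *. pose proof (inv_INR_pos k ltac:(lia)) as Hi.
  assert (Hcs : cos (2 * PI * ph) <= 0) by (apply cos_le_0; pose proof PI_RGT_0; nra).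
  apply (star_on_circle N k) in Hs; auto. 2:{ apply pair_neq_origin. right. nra. }
  simpl in Hs. destruct Hs as [[H1 H2]|[[H _]|[H _]]]; auto.
  exfalso. nra.
Qed.

Lemma star_circ_pt_last_quarter N k ph v : (1 <= k <= N)%nat -> 3 / 4 < ph < 1 ->
  star N v (circ_pt k (ph - / 4)) -> v = V0 \/ v = VL k.
Proof.
  intros Hk Hph Hs. pose proof (circ_pt_in_circle k (ph - /4)) as Hc.
  rewrite circ_pt_shift in *. pose proof (inv_INR_pos k ltac:(lia)) as Hi.
  assert (Hsn : sin (2 * PI * ph) < 0) by (apply sin_lt_0; pose proof PI_RGT_0; nra).
  assert (Hcs : 0 < cos (2 * PI * ph)).
  { replace (cos (2 * PI * ph)) with (cos (2 * PI * ph - 2 * PI))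
      by (rewrite cos_minus, cos_2PI, sin_2PI; ring).
    apply cos_gt_0; pose proof PI_RGT_0; nra. }
  apply (star_on_circle N k) in Hs; auto. 2:{ apply pair_neq_origin. left. nra. }
  simpl in Hs. destruct Hs as [[H _]|[[H1 H2]|[H _]]]; auto.
  exfalso. apply H2. split; nra.
Qed.

Lemma star_g_loop_outside_gaps N s v : (forall k, (1 <= k <= N)%nat -> ~ (a_k k < s < b_k k)) ->
  star N v (g_loop s) -> v = V0.
Proof.
  intros Hr Hs.
  destruct (classic (exists k, (1 <= k)%nat /\ a_k k < s < b_k k)) as [[k [Hk Hg]]|Hn].
  - rewrite (g_loop_in_gap k s Hk Hg) in Hs. destruct (le_lt_dec k N).
    + exfalso. apply (Hr k); auto.
    + eapply (star_small_circle N k _ v); eauto. apply circ_pt_in_circle.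
  - rewrite g_loop_off_gaps in Hs. { apply (star_origin N v Hs). }
    intros k Hk Hg. apply Hn; eauto.
Qed.

Lemma cont_on_I2_uniform (H : R -> R -> pt) : cont_on_I2 H -> forall eps, 0 < eps ->
  exists rho, 0 < rho /\ forall s t s' t', unit_I s -> unit_I t -> unit_I s' -> unit_I t' ->
    Rabs (s - s') < rho -> Rabs (t - t') < rho -> dist2 (H s t) (H s' t') < eps.
Proof.
  intros Hc eps Heps.
  assert (Hex : forall u v, exists d : posreal, unit_I u -> unit_I v ->
     forall s' t', unit_I s' -> unit_I t' ->
     sqrt ((s' - u)^2 + (t' - v)^2) < 4 * d -> dist2 (H s' t') (H u v) < eps / 2).
  { intros u v. destruct (classic (unit_I u /\ unit_I v)) as [[Hu Hv]|Hn].
    - destruct (Hc u v Hu Hv (eps/2) ltac:(lra)) as [d [Hd Hp]].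
      exists (mkposreal (d / 4) ltac:(lra)). intros _ _ s' t' Hs' Ht' Hsq. cbn [pos] in Hsq.
      apply Hp; auto. lra.
    - exists (mkposreal 1 Rlt_0_1). intros Hu Hv. exfalso; auto. }
  set (D := fun u v => proj1_sig (constructive_indefinite_description _ (Hex u v))).
  assert (HD : forall u v, unit_I u -> unit_I v -> forall s' t', unit_I s' -> unit_I t' ->
     sqrt ((s' - u)^2 + (t' - v)^2) < 4 * D u v -> dist2 (H s' t') (H u v) < eps / 2).
  { intros u v. unfold D. destruct (constructive_indefinite_description _ (Hex u v)) as [d Hd].
    exact Hd. }
  (* Every point of the square lies in the [D u v]-box of some centre [(u, v)]
     with [D u v >= d0]; two points [d0]-close are then in the [2 D u v]-box. *)
  destruct (Compactness.compactness_value_2d 0 1 0 1 D) as [d0 Hd0].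
  exists d0. split; [apply cond_pos|].
  intros s t s' t' Hs Ht Hs' Ht' H1 H2.
  apply NNPP. intros Hneg. apply (Hd0 s t Hs Ht). intros [u [v [Hu [Hv [Hsu [Htv Hle]]]]]].
  apply Hneg. pose proof (cond_pos (D u v)).
  assert (A1 : dist2 (H s t) (H u v) < eps / 2).
  { apply HD; auto. eapply Rle_lt_trans; [apply sqrt_sum_sq_le|lra]. }
  assert (A2 : dist2 (H s' t') (H u v) < eps / 2).
  { apply HD; auto. eapply Rle_lt_trans; [apply sqrt_sum_sq_le|].
    pose proof (Rabs_triang (s' - s) (s - u)). pose proof (Rabs_triang (t' - t) (t - v)).
    replace (s' - s + (s - u)) with (s' - u) in * by ring.
    replace (t' - t + (t - v)) with (t' - v) in * by ring.
    rewrite Rabs_minus_sym in H1, H2. lra. }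
  pose proof (dist2_triangle (H s t) (H u v) (H s' t')). rewrite (dist2_sym (H u v)) in *. lra.
Qed.

Definition clamp (t : R) : R := Rmax 0 (Rmin 1 t).

Lemma clamp_unit t : unit_I (clamp t).
Proof.
  unfold clamp, unit_I, Rmin; destruct (Rle_dec 1 t); unfold Rmax;
  repeat match goal with |- context [Rle_dec ?a ?b] => destruct (Rle_dec a b) end; lra.
Qed.

Lemma clamp_id t : unit_I t -> clamp t = t.
Proof.
  intros [H1 H2]. unfold clamp, Rmin; destruct (Rle_dec 1 t); unfold Rmax;
  repeat match goal with |- context [Rle_dec ?a ?b] => destruct (Rle_dec a b) end; lra.
Qed.

Lemma clamp_lipschitz t t' : Rabs (clamp t - clamp t') <= Rabs (t - t').
Proof.
  unfold clamp, Rmin; destruct (Rle_dec 1 t), (Rle_dec 1 t'); unfold Rmax;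
  repeat match goal with |- context [Rle_dec ?a ?b] => destruct (Rle_dec a b) end;
  unfold Rabs; repeat match goal with |- context [Rcase_abs ?a] => destruct (Rcase_abs a) end;
  lra.
Qed.

(* Off the origin, the sign of [circle_sign c] tells whether the circle through
   the point is larger or smaller than the one of radius [c / 2]. *)
Definition circle_sign (c : R) (p : pt) : R := (fst p)^2 + (snd p)^2 - c * snd p.

Lemma circle_sign_in_circle c n p : in_circle n p -> circle_sign c p = snd p * (2 * / INR n - c).
Proof. intros Hp. unfold circle_sign. rewrite (in_circle_eq n p Hp). ring. Qed.

Lemma circle_sign_continuous (f : R -> pt) c : 0 < c -> cont_on_I f ->
  (forall x, unit_I x -> hawaiian (f x)) -> continuity (fun t => circle_sign c (f (clamp t))).
Proof.
  intros Hc Hf Hh x. unfold continuity_pt, continue_in, limit1_in, limit_in. simpl. unfold R_dist.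
  intros eps Heps. set (B := 10 + c).
  destruct (Hf (clamp x) (clamp_unit x) (eps / B) ltac:(unfold B; apply Rdiv_lt_0_compat; lra))
    as [d [Hd Hp]].
  exists d. split; auto. intros x' [_ Hx'].
  specialize (Hp (clamp x') (clamp_unit x')
                 ltac:(eapply Rle_lt_trans; [apply clamp_lipschitz|exact Hx'])).
  pose proof (dist2_ge_x (f (clamp x')) (f (clamp x))) as Dx.
  pose proof (dist2_ge_y (f (clamp x')) (f (clamp x))) as Dy.
  destruct (hawaiian_bounds _ (Hh _ (clamp_unit x'))) as [Bx1 By1].
  destruct (hawaiian_bounds _ (Hh _ (clamp_unit x))) as [Bx2 By2].
  unfold circle_sign. set (p := f (clamp x')) in *. set (q := f (clamp x)) in *.
  replace (fst p ^ 2 + snd p ^ 2 - c * snd p - (fst q ^ 2 + snd q ^ 2 - c * snd q))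
    with ((fst p + fst q) * (fst p - fst q) + (snd p + snd q - c) * (snd p - snd q)) by ring.
  eapply Rle_lt_trans; [apply Rabs_triang|]. rewrite !Rabs_mult.
  assert (Rabs (fst p + fst q) <= 2) by (eapply Rle_trans; [apply Rabs_triang|lra]).
  assert (Rabs (snd p + snd q - c) <= 4 + c) by (unfold Rabs; destruct (Rcase_abs _); lra).
  assert (dist2 p q * B < eps).
  { replace eps with (eps / B * B) by (unfold B; field; lra).
    apply Rmult_lt_compat_r; [unfold B; lra|exact Hp]. }
  assert (Rabs (fst p + fst q) * Rabs (fst p - fst q) <= 2 * dist2 p q)
    by (apply Rmult_le_compat; auto using Rabs_pos).
  assert (Rabs (snd p + snd q - c) * Rabs (snd p - snd q) <= (4 + c) * dist2 p q)
    by (apply Rmult_le_compat; auto using Rabs_pos).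
  pose proof (dist2_pos p q). unfold B in *. nra.
Qed.

(* [K - 1/2] is no integer, so no circle [C_n] has radius exactly half of
   [2 / (K - 1/2)], and only [C_K] among [C_1], ..., [C_K] is smaller. *)
Lemma circle_sign_factor_nonzero K n : (1 <= n)%nat -> 2 * / INR n <> 2 / (INR K - / 2).
Proof.
  intros Hn E. pose proof (INR_pos n Hn).
  assert (INR n = INR K - / 2).
  { apply (f_equal Rinv) in E. rewrite Rinv_mult, Rinv_inv in E. unfold Rdiv in E.
    rewrite Rinv_mult, Rinv_inv in E. lra. }
  assert (INR (2 * n + 1) = INR (2 * K)) by (rewrite plus_INR, !mult_INR; simpl; lra).
  apply INR_eq in H1. lia.
Qed.

Lemma circle_sign_factor_inner K n : (1 <= n < K)%nat -> 0 < 2 * / INR n - 2 / (INR K - / 2).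
Proof.
  intros Hn. assert (INR n + 1 <= INR K) by (rewrite <- S_INR; apply le_INR; lia).
  pose proof (INR_pos n ltac:(lia)). unfold Rdiv.
  assert (/ (INR K - / 2) < / (INR n)) by (apply Rinv_lt_contravar; nra). lra.
Qed.

Lemma circle_sign_factor_outer K : (1 <= K)%nat -> 2 * / INR K - 2 / (INR K - / 2) < 0.
Proof.
  intros HK. assert (1 <= INR K) by (apply (le_INR 1); lia).
  pose proof (Rinv_lt_contravar (INR K - /2) (INR K) ltac:(nra) ltac:(lra)). unfold Rdiv. lra.
Qed.

Lemma loop_zero_between_circles (f : R -> pt) a b k k' : cont_on_I f ->
  (forall x, unit_I x -> hawaiian (f x)) -> 0 <= a -> a <= b -> b <= 1 ->
  (1 <= k)%nat -> (1 <= k')%nat -> k <> k' ->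
  in_circle k (f a) -> f a <> origin -> in_circle k' (f b) -> f b <> origin ->
  exists t, a <= t <= b /\ f t = origin.
Proof.
  intros Hf Hh Ha Hab Hb Hk Hk' Hkk Hca Hna Hcb Hnb.
  set (K := Nat.max k k'). set (c := 2 / (INR K - / 2)).
  assert (Hc0 : 0 < c).
  { assert (1 <= INR K) by (apply (le_INR 1); unfold K; lia).
    unfold c. apply Rdiv_lt_0_compat; lra. }
  assert (Hsplit : (2 * / INR k - c) * (2 * / INR k' - c) < 0).
  { assert (k = K /\ (k' < K)%nat \/ k' = K /\ (k < K)%nat) as [[EK Hlt]|[EK Hlt]]
      by (unfold K; lia); rewrite EK.
    - pose proof (circle_sign_factor_outer K ltac:(lia)).
      pose proof (circle_sign_factor_inner K k' ltac:(lia)). unfold c. nra.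
    - pose proof (circle_sign_factor_outer K ltac:(lia)).
      pose proof (circle_sign_factor_inner K k ltac:(lia)). unfold c. nra. }
  set (F := fun t => circle_sign c (f (clamp t))).
  assert (HFab : F a * F b <= 0).
  { unfold F. rewrite !clamp_id by (split; lra).
    rewrite (circle_sign_in_circle c k), (circle_sign_in_circle c k') by auto.
    pose proof (in_circle_y_pos k (f a) Hk Hca Hna).
    pose proof (in_circle_y_pos k' (f b) Hk' Hcb Hnb).
    assert (0 < snd (f a) * snd (f b)) by nra. nra. }
  destruct (IVT_cor F a b (circle_sign_continuous f c Hc0 Hf Hh) Hab HFab) as [z [Hz Hz0]].
  exists z. split; auto.
  unfold F in Hz0. rewrite clamp_id in Hz0 by (split; lra).
  destruct (classic (f z = origin)) as [|Hne]; auto. exfalso.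
  destruct (Hh z ltac:(split; lra)) as [n [Hn Hcn]].
  rewrite (circle_sign_in_circle c n _ Hcn) in Hz0.
  pose proof (in_circle_y_pos n _ Hn Hcn Hne).
  apply (circle_sign_factor_nonzero K n Hn).
  apply Rmult_integral in Hz0. destruct Hz0; fold c; lra.
Qed.

Section Limsup.
Variable u : nat -> R.
Hypothesis Hu : forall n, 0 <= u n <= 1.

Definition frequently_above (t : R) : Prop := forall M, exists n, (M <= n)%nat /\ t <= u n.

Lemma frequently_above_bound : bound frequently_above.
Proof. exists 1. intros t Ht. destruct (Ht 0%nat) as [n [_ Hn]]. pose proof (Hu n). lra. Qed.

Lemma frequently_above_inhabited : exists t, frequently_above t.
Proof. exists 0. intros M. exists M. split; auto. apply Hu. Qed.

Definition limsup : R :=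
  proj1_sig (completeness frequently_above frequently_above_bound frequently_above_inhabited).

Lemma limsup_lub : is_lub frequently_above limsup.
Proof. unfold limsup. destruct (completeness _ _ _) as [x Hx]. exact Hx. Qed.

Lemma limsup_unit : 0 <= limsup <= 1.
Proof.
  destruct limsup_lub as [H1 H2]. split.
  - apply H1. intros M. exists M. split; auto. apply Hu.
  - apply H2. intros t Ht. destruct (Ht 0%nat) as [n [_ Hn]]. pose proof (Hu n). lra.
Qed.

Lemma limsup_frequently_near eps M : 0 < eps -> exists n, (M <= n)%nat /\ limsup - eps < u n.
Proof.
  intros He. destruct limsup_lub as [H1 H2].
  apply NNPP. intros Hn.
  assert (Hb : is_upper_bound frequently_above (limsup - eps)).
  { intros t Ht. destruct (Ht M) as [n [Hn1 Hn2]].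
    destruct (Rle_dec t (limsup - eps)); auto. exfalso. apply Hn. exists n. split; auto. lra. }
  specialize (H2 _ Hb). lra.
Qed.

Lemma limsup_eventually_below eps : 0 < eps ->
  exists M, forall n, (M <= n)%nat -> u n < limsup + eps.
Proof.
  intros He. apply NNPP. intros Hn.
  assert (HA : frequently_above (limsup + eps)).
  { intros M. apply NNPP. intros C. apply Hn. exists M. intros n Hn1.
    destruct (Rlt_dec (u n) (limsup + eps)); auto. exfalso. apply C. exists n. split; auto. lra. }
  destruct limsup_lub as [H1 _]. specialize (H1 _ HA). lra.
Qed.

Lemma limsup_closed (P : R -> Prop) :
  (forall x, 0 <= x <= 1 -> ~ P x ->
     exists d, 0 < d /\ forall y, unit_I y -> Rabs (y - x) < d -> ~ P y) ->
  (forall n, P (u n)) -> P limsup.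
Proof.
  intros Hopen HP. apply NNPP. intros Hn.
  destruct (Hopen limsup limsup_unit Hn) as [d [Hd Hy]].
  destruct (limsup_eventually_below d Hd) as [M HM].
  destruct (limsup_frequently_near d M Hd) as [n [Hn1 Hn2]].
  specialize (HM n Hn1). apply (Hy (u n)); [apply Hu| |apply HP].
  unfold Rabs; destruct (Rcase_abs (u n - limsup)); lra.
Qed.

End Limsup.

Lemma limsup_le_shift u v (Hu : forall n, 0 <= u n <= 1) (Hv : forall n, 0 <= v n <= 1) d n0 :
  (forall n, (n0 <= n)%nat -> u n + d <= v n) -> limsup u Hu + d <= limsup v Hv.
Proof.
  intros Huv. destruct (Rle_dec (limsup u Hu + d) (limsup v Hv)) as [|Hlt]; auto. exfalso.
  set (e := (limsup u Hu + d - limsup v Hv) / 2).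
  assert (He : 0 < e) by (unfold e; lra).
  destruct (limsup_eventually_below v Hv e He) as [M HM].
  destruct (limsup_frequently_near u Hu e (Nat.max M n0) He) as [n [Hn1 Hn2]].
  specialize (HM n ltac:(lia)). specialize (Huv n ltac:(lia)). unfold e in *. lra.
Qed.

(* Cantor's enumeration of [nat * nat], along the antidiagonals. *)
Fixpoint unpair (n : nat) : nat * nat :=
  match n with
  | O => (0%nat, 0%nat)
  | S n' => let (a, b) := unpair n' in
            match a with O => (S b, 0%nat) | S a' => (a', S b) end
  end.

Lemma unpair_surj a b : exists n, unpair n = (a, b).
Proof.
  assert (Hd : forall s b, (b <= s)%nat -> exists n, unpair n = ((s - b)%nat, b)).
  { induction s as [|s IH]; intros b' Hb.
    - assert (b' = 0%nat) by lia. subst. now exists 0%nat.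
    - induction b' as [|b' IHb].
      + destruct (IH s ltac:(lia)) as [n Hn]. exists (S n). simpl. rewrite Hn.
        replace (s - s)%nat with 0%nat by lia. f_equal; lia.
      + destruct (IHb ltac:(lia)) as [n Hn]. exists (S n). simpl. rewrite Hn.
        destruct (S s - b')%nat eqn:E; [lia|]. f_equal; lia. }
  destruct (Hd (a + b)%nat b ltac:(lia)) as [n Hn]. exists n. rewrite Hn. f_equal. lia.
Qed.

Definition dyadic (n : nat) : R :=
  let (a, b) := unpair n in let (c, d) := unpair a in (INR c - INR d) / 2 ^ b.

Lemma dyadic_dense r1 r2 : r1 < r2 -> exists n, r1 < dyadic n < r2.
Proof.
  intros Hr.
  destruct (Pow_x_infinity 2 ltac:(rewrite Rabs_right; lra) (2 / (r2 - r1))) as [b Hb].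
  specialize (Hb b (Nat.le_refl b)). rewrite Rabs_right in Hb by (left; apply pow_lt; lra).
  pose proof (pow_lt 2 b ltac:(lra)) as H2b.
  set (z := up (2 ^ b * r1)). destruct (archimed (2 ^ b * r1)) as [Hz1 Hz2]. fold z in Hz1, Hz2.
  set (c := Z.to_nat z). set (d := Z.to_nat (- z)).
  assert (Hcd : IZR z = INR c - INR d).
  { unfold c, d. rewrite !INR_IZR_INZ. destruct (Z_le_gt_dec 0 z).
    - rewrite Z2Nat.id by lia. replace (Z.to_nat (- z)) with 0%nat by lia. simpl. lra.
    - rewrite (Z2Nat.id (- z)) by lia. replace (Z.to_nat z) with 0%nat by lia. simpl.
      rewrite opp_IZR. lra. }
  destruct (unpair_surj c d) as [a Ha]. destruct (unpair_surj a b) as [n Hn].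
  exists n. unfold dyadic. rewrite Hn, Ha, <- Hcd.
  assert (Hb' : 2 ^ b * (r2 - r1) >= 2).
  { assert (2 / (r2 - r1) * (r2 - r1) = 2) by (field; lra).
    assert (2 ^ b * (r2 - r1) >= 2 / (r2 - r1) * (r2 - r1)) by (apply Rmult_ge_compat_r; lra).
    lra. }
  assert (E2 : 2 ^ b * (IZR z / 2 ^ b) = IZR z) by (field; lra).
  split; apply Rmult_lt_reg_l with (r := 2 ^ b); auto; rewrite E2; lra.
Qed.

Definition real_code (r : R) (n : nat) : bool := if Rlt_dec (dyadic n) r then true else false.

Lemma real_code_separates r1 r2 : r1 < r2 ->
  exists n, real_code r1 n = false /\ real_code r2 n = true.
Proof.
  intros Hr. destruct (dyadic_dense r1 r2 Hr) as [n Hn]. exists n. unfold real_code.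
  destruct (Rlt_dec (dyadic n) r1); destruct (Rlt_dec (dyadic n) r2); try lra; auto.
Qed.

Lemma real_code_injective r1 r2 : r1 <> r2 -> exists n, real_code r1 n <> real_code r2 n.
Proof.
  intros Hne. destruct (Rtotal_order r1 r2) as [Hlt|[Heq|Hgt]]; [|contradiction|].
  - destruct (real_code_separates r1 r2 Hlt) as [n [B1 B2]]. exists n. congruence.
  - destruct (real_code_separates r2 r1 Hgt) as [n [B1 B2]]. exists n. congruence.
Qed.

Lemma first_difference (be be' : nat -> bool) : (exists i, be i <> be' i) ->
  exists i, be i <> be' i /\ forall j, (j < i)%nat -> be j = be' j.
Proof.
  intros [i Hi]. revert Hi. induction i as [i IH] using lt_wf_ind. intros Hi.
  destruct (classic (exists j, (j < i)%nat /\ be j <> be' j)) as [[j [Hj1 Hj2]]|Hn].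
  - exact (IH j Hj1 Hj2).
  - exists i. split; auto. intros j Hj. apply NNPP. intros C. apply Hn. eauto.
Qed.

Lemma nat_crossing (P : nat -> Prop) lo hi : (lo <= hi)%nat -> P lo -> ~ P hi ->
  exists j, (lo <= j < hi)%nat /\ P j /\ ~ P (S j).
Proof.
  intros Hle Hlo Hhi. induction hi as [|hi IH].
  - assert (lo = 0%nat) by lia. subst. contradiction.
  - destruct (Nat.eq_dec lo (S hi)) as [->|Hne]; [contradiction|].
    destruct (classic (P hi)) as [Ph|Ph].
    + exists hi. split; [lia|]. auto.
    + destruct (IH ltac:(lia) Ph) as [j [? ?]]. exists j. split; [lia|auto].
Qed.

Lemma inv_pow3_small eps : 0 < eps -> exists K, / 3 ^ K < eps.
Proof.
  intros He. destruct (Pow_x_infinity 3 ltac:(rewrite Rabs_right; lra) (/ eps + 1)) as [K HK].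
  exists K. specialize (HK K (Nat.le_refl K)). rewrite Rabs_right in HK by (left; apply pow3_pos).
  pose proof (pow3_pos K). pose proof (Rinv_0_lt_compat _ He).
  apply Rmult_lt_reg_l with (r := 3 ^ K); auto. rewrite Rinv_r by lra.
  apply Rmult_lt_reg_l with (r := / eps); auto.
  replace (/ eps * (3 ^ K * eps)) with (3 ^ K) by (field; lra). lra.
Qed.

Section Homotopy.
Variables (f : R -> pt) (H : R -> R -> pt).
Hypothesis Hf : loop_in_X f.
Hypothesis HH : cont_on_I2 H.
Hypothesis Hhaw : forall s t, unit_I s -> unit_I t -> hawaiian (H s t).
Hypothesis HH0 : forall s, unit_I s -> H s 0 = f s.
Hypothesis HH1 : forall s, unit_I s -> H s 1 = g_loop s.
Hypothesis Hend : forall t, unit_I t -> H 0 t = f 0 /\ H 1 t = f 1.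

Lemma f_zero : f 0 = origin. Proof. apply Hf. Qed.
Lemma f_one : f 1 = origin. Proof. apply Hf. Qed.
Lemma f_cont : cont_on_I f. Proof. apply Hf. Qed.
Lemma f_hawaiian x : unit_I x -> hawaiian (f x). Proof. apply Hf. Qed.

Lemma f_uniform m : exists d, 0 < d /\ forall s s', unit_I s -> unit_I s' ->
  Rabs (s - s') < d -> dist2 (f s) (f s') < / INR (S m).
Proof.
  destruct (cont_on_I2_uniform H HH (/ INR (S m))
              ltac:(apply Rinv_0_lt_compat, lt_0_INR; lia)) as [r [Hr Hu]].
  exists r. split; auto. intros s s' Hs Hs' Hd. rewrite <- (HH0 s), <- (HH0 s') by auto.
  apply Hu; auto; try (split; lra). rewrite Rminus_diag, Rabs_R0. auto.
Qed.

Definition modulus (m : nat) : R := proj1_sig (constructive_indefinite_description _ (f_uniform m)).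

Lemma modulus_spec m : 0 < modulus m /\ forall s s', unit_I s -> unit_I s' ->
  Rabs (s - s') < modulus m -> dist2 (f s) (f s') < / INR (S m).
Proof. unfold modulus. destruct (constructive_indefinite_description _ _) as [d Hd]. exact Hd. Qed.

Lemma modulus_zero_far m s t : (1 <= m)%nat -> unit_I s -> unit_I t -> f t = origin ->
  snd (f s) > / INR m -> modulus m <= Rabs (s - t).
Proof.
  intros Hm Hs Ht Hft Hy. destruct (Rle_dec (modulus m) (Rabs (s - t))) as [|Hlt]; auto.
  exfalso. pose proof (proj2 (modulus_spec m) s t Hs Ht ltac:(lra)) as Hd.
  rewrite Hft in Hd. pose proof (dist2_ge_y (f s) origin) as Dy. simpl in Dy.
  pose proof (inv_INR_pos m Hm).
  rewrite Rminus_0_r, Rabs_right in Dy by lra.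
  assert (/ INR (S m) < / INR m) by (apply Rinv_lt_contravar; [apply Rmult_lt_0_compat|];
    apply lt_INR || apply lt_0_INR; lia).
  lra.
Qed.

Section Grid.
Variable K : nat.

Definition mesh : R := / 3 ^ K.
Definition grid_size : nat := (3 ^ K)%nat.
Definition grid_pt (j : nat) : R := INR j * mesh.

Lemma INR_grid_size : INR grid_size = 3 ^ K.
Proof. unfold grid_size. rewrite pow_INR. simpl. f_equal. lra. Qed.

Lemma mesh_pos : 0 < mesh. Proof. apply inv_pow3_pos. Qed.

Lemma grid_pt_last : grid_pt grid_size = 1.
Proof. unfold grid_pt, mesh. rewrite INR_grid_size. field. pose proof (pow3_pos K); lra. Qed.

Lemma grid_pt_0 : grid_pt 0 = 0. Proof. unfold grid_pt. simpl. ring. Qed.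

Lemma grid_pt_S j : grid_pt (S j) = grid_pt j + mesh.
Proof. unfold grid_pt. rewrite S_INR. ring. Qed.

Lemma grid_pt_lt i j : (i < j)%nat -> grid_pt i < grid_pt j.
Proof. intros. unfold grid_pt. apply Rmult_lt_compat_r; [apply mesh_pos|apply lt_INR; auto]. Qed.

Lemma grid_pt_le i j : (i <= j)%nat -> grid_pt i <= grid_pt j.
Proof.
  intros. unfold grid_pt. apply Rmult_le_compat_r; [left; apply mesh_pos|apply le_INR; auto].
Qed.

Lemma grid_pt_lt_inv i j : grid_pt i < grid_pt j -> (i < j)%nat.
Proof. intros. destruct (le_lt_dec j i) as [Hle|]; auto. apply grid_pt_le in Hle. lra. Qed.

Lemma grid_pt_le_inv i j : grid_pt i <= grid_pt j -> (i <= j)%nat.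
Proof. intros. destruct (le_lt_dec i j) as [|Hlt]; auto. apply grid_pt_lt in Hlt. lra. Qed.

Lemma grid_pt_nonneg j : 0 <= grid_pt j.
Proof. unfold grid_pt. apply Rmult_le_pos; [apply pos_INR|left; apply mesh_pos]. Qed.

Lemma grid_pt_unit j : (j <= grid_size)%nat -> unit_I (grid_pt j).
Proof.
  intros Hj. split; [apply grid_pt_nonneg|].
  rewrite <- grid_pt_last. apply grid_pt_le; auto.
Qed.

(* Once [K > gap_stage k], the gap [k] is [gap_width k] meshes long and its
   endpoints are grid points. *)
Definition gap_width (k : nat) : nat := (3 ^ (K - S (gap_stage k)))%nat.

Lemma gap_width_pos k : (0 < gap_width k)%nat.
Proof. unfold gap_width. pose proof (Nat.pow_nonzero 3 (K - S (gap_stage k))). lia. Qed.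

Definition grid_floor (x : R) (i : nat) : Prop :=
  (i <= grid_size)%nat /\ grid_pt i <= x /\
  forall j, (j <= grid_size)%nat -> grid_pt j <= x -> (j <= i)%nat.

Lemma grid_floor_exists x : 0 <= x <= 1 -> exists i, grid_floor x i.
Proof.
  intros Hx. destruct (classic (grid_pt grid_size <= x)) as [HM|HM].
  { exists grid_size. repeat split; auto. }
  assert (P0 : grid_pt 0 <= x) by (rewrite grid_pt_0; lra).
  destruct (nat_crossing (fun i => grid_pt i <= x) 0 grid_size ltac:(lia) P0 HM)
    as [i [Hi [P1 NP1]]].
  exists i. repeat split; auto; try lia. intros j Hj Hjx.
  destruct (le_lt_dec j i) as [|Hlt]; auto. exfalso.
  apply NP1. pose proof (grid_pt_le (S i) j ltac:(lia)). lra.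
Qed.

Variable rho : R.
Hypothesis HKr : / 3 ^ K < rho.

Lemma rho_pos : 0 < rho.
Proof. pose proof (inv_pow3_pos K). lra. Qed.

Lemma grid_pt_close i j : (i <= j <= S i)%nat \/ (j <= i <= S j)%nat ->
  Rabs (grid_pt j - grid_pt i) < rho.
Proof.
  assert (Hstep : forall i j, (i <= j <= S i)%nat -> Rabs (grid_pt j - grid_pt i) < rho).
  { intros i' j' Hij. pose proof mesh_pos. unfold mesh in *.
    destruct (Nat.eq_dec j' i') as [->|Hne]. { rewrite Rminus_diag, Rabs_R0. apply rho_pos. }
    replace j' with (S i') by lia. rewrite grid_pt_S. unfold mesh. rewrite Rabs_right; lra. }
  intros [Hij|Hji]; auto. rewrite Rabs_minus_sym. auto.
Qed.

Variable N : nat.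

Definition at_rest (j : nat) : Prop := forall k, (1 <= k <= N)%nat -> ~ (a_k k < grid_pt j < b_k k).

Lemma at_rest_a_k k ia : (1 <= k)%nat -> grid_pt ia = a_k k -> at_rest ia.
Proof. intros Hk Ha k' Hk'. rewrite Ha. apply endpoint_a_not_in_gap; lia. Qed.

Lemma at_rest_b_k k ib : (1 <= k)%nat -> grid_pt ib = b_k k -> at_rest ib.
Proof. intros Hk Hb k' Hk'. rewrite Hb. apply endpoint_b_not_in_gap; lia. Qed.

Lemma at_rest_last : at_rest grid_size.
Proof. intros k Hk. rewrite grid_pt_last. pose proof (gap_in_unit k ltac:(lia)). lra. Qed.

(* Makes every gap of index at most [N] at least [9] meshes long. *)
Hypothesis HK : (N + 2 <= K)%nat.

Lemma gap_on_grid k : (1 <= k <= N)%nat -> exists ia,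
  grid_pt ia = a_k k /\ grid_pt (ia + gap_width k) = b_k k /\ (ia + gap_width k <= grid_size)%nat.
Proof.
  intros Hk. unfold gap_width. set (n := gap_stage k). set (e := (K - S n)%nat).
  pose proof (gap_stage_lt k ltac:(lia)).
  assert (E3 : 3 ^ K = 3 * 3 ^ n * 3 ^ e)
    by (replace K with (S n + e)%nat by (unfold e, n in *; lia); rewrite pow_add; reflexivity).
  destruct (cantor_left_triadic n (gap_pos k)) as [c Hc].
  pose proof (pow3_pos e). pose proof (pow3_pos n).
  assert (Ha : grid_pt ((3 * c + 1) * 3 ^ e) = a_k k).
  { unfold grid_pt, mesh. rewrite a_k_eq. fold n. rewrite Hc, mult_INR, pow_INR, plus_INR, mult_INR.
    replace (INR 3) with 3 by (simpl; ring). replace (INR 1) with 1 by reflexivity.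
    rewrite E3. simpl pow. field. repeat split; lra. }
  assert (Hb : grid_pt ((3 * c + 1) * 3 ^ e + 3 ^ e) = b_k k).
  { unfold grid_pt, mesh. rewrite b_k_eq. fold n.
    rewrite Hc, plus_INR, mult_INR, pow_INR, plus_INR, mult_INR.
    replace (INR 3) with 3 by (simpl; ring). replace (INR 1) with 1 by reflexivity.
    rewrite E3. simpl pow. field. repeat split; lra. }
  exists ((3 * c + 1) * 3 ^ e)%nat. repeat split; auto.
  apply grid_pt_le_inv. rewrite Hb, grid_pt_last. apply gap_in_unit. lia.
Qed.

Variable L : R.
Hypothesis HL : 0 < L.
Variable vc : pt -> vertex.
Hypothesis Hvc : forall z, hawaiian z ->
  forall z', hawaiian z' -> dist2 z' z < L -> star N (vc z) z'.
Hypothesis Hu : forall s t s' t', unit_I s -> unit_I t -> unit_I s' -> unit_I t' ->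
  Rabs (s - s') < rho -> Rabs (t - t') < rho -> dist2 (H s t) (H s' t') < L.

(* Row [k] samples the homotopy at time [grid_pt k]: row [0] is [f] and row
   [grid_size] is [g]. *)
Definition grid_vertex (k j : nat) : vertex := vc (H (grid_pt j) (grid_pt k)).

Lemma vc_origin : vc origin = V0.
Proof.
  assert (Horigin : hawaiian origin) by (exists 1%nat; split; auto; apply in_circle_origin).
  apply (star_origin N), Hvc; auto.
  replace (dist2 origin origin) with 0; [exact HL|].
  unfold dist2. rewrite <- sqrt_0. f_equal. simpl. ring.
Qed.

Lemma grid_vertex_ends k : (k <= grid_size)%nat ->
  grid_vertex k 0 = V0 /\ grid_vertex k grid_size = V0.
Proof.
  intros Hk. unfold grid_vertex. rewrite grid_pt_0, grid_pt_last.
  destruct (Hend (grid_pt k) (grid_pt_unit k Hk)) as [E1 E2]. rewrite E1, E2, f_zero, f_one.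
  split; apply vc_origin.
Qed.

Lemma star_grid_vertex k j s t : (k <= grid_size)%nat -> (j <= grid_size)%nat ->
  unit_I s -> unit_I t -> Rabs (s - grid_pt j) < rho -> Rabs (t - grid_pt k) < rho ->
  star N (grid_vertex k j) (H s t).
Proof.
  intros Hk Hj Hs Ht H1 H2. unfold grid_vertex.
  apply Hvc; [apply Hhaw; apply grid_pt_unit; auto|apply Hhaw; auto|].
  apply Hu; auto; apply grid_pt_unit; auto.
Qed.

Lemma grid_square_in_edge k j : (k < grid_size)%nat -> (j < grid_size)%nat ->
  edge_square (grid_vertex k) (grid_vertex (S k)) j.
Proof.
  intros Hk Hj.
  assert (Hz : hawaiian (H (grid_pt j) (grid_pt k))) by (apply Hhaw; apply grid_pt_unit; lia).
  destruct (stars_through_point N _ Hz) as [a [b Hab]]. exists a, b.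
  assert (Is : unit_I (grid_pt j)) by (apply grid_pt_unit; lia).
  assert (It : unit_I (grid_pt k)) by (apply grid_pt_unit; lia).
  repeat split; apply Hab; apply star_grid_vertex; auto; try lia; apply grid_pt_close; lia.
Qed.

Lemma grid_stack_invariant :
  stack (grid_vertex 0) grid_size = stack (grid_vertex grid_size) grid_size.
Proof.
  assert (Hrows : forall k, (k <= grid_size)%nat ->
            stack (grid_vertex 0) grid_size = stack (grid_vertex k) grid_size).
  { induction k; intros Hk; auto. rewrite IHk by lia.
    destruct (grid_vertex_ends k ltac:(lia)), (grid_vertex_ends (S k) ltac:(lia)).
    apply stack_homotopy_invariance; try congruence.
    intros j Hj. apply grid_square_in_edge; lia. }
  apply Hrows; lia.
Qed.

Definition f_vertex := grid_vertex 0.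
Definition f_stack (j : nat) := stack f_vertex j.
Definition g_vertex := grid_vertex grid_size.
Definition g_stack (j : nat) := stack g_vertex j.

Lemma star_f_vertex j s : (j <= grid_size)%nat -> unit_I s -> Rabs (s - grid_pt j) < rho ->
  star N (f_vertex j) (f s).
Proof.
  intros Hj Hs Hd. rewrite <- (HH0 s Hs). apply star_grid_vertex; auto; try lia; [split; lra|].
  rewrite grid_pt_0, Rminus_diag, Rabs_R0. apply rho_pos.
Qed.

Lemma star_f_vertex_here j : (j <= grid_size)%nat -> star N (f_vertex j) (f (grid_pt j)).
Proof.
  intros Hj. apply star_f_vertex; auto; [apply grid_pt_unit; auto|].
  rewrite Rminus_diag, Rabs_R0. apply rho_pos.
Qed.

Lemma star_g_vertex j j' : (j <= grid_size)%nat -> (j' <= grid_size)%nat ->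
  (j' <= S j)%nat -> (j <= S j')%nat -> star N (g_vertex j) (g_loop (grid_pt j')).
Proof.
  intros. rewrite <- (HH1 _ (grid_pt_unit j' ltac:(lia))). unfold g_vertex.
  apply star_grid_vertex; [lia|lia|apply grid_pt_unit; lia|split; lra| |].
  - apply grid_pt_close; lia.
  - rewrite grid_pt_last, Rminus_diag, Rabs_R0. apply rho_pos.
Qed.

Lemma at_rest_V0 j : (j <= grid_size)%nat -> at_rest j -> g_vertex j = V0.
Proof.
  intros Hj Hr. apply (star_g_loop_outside_gaps N (grid_pt j)); auto.
  apply star_g_vertex; lia.
Qed.

Section Gap.
Variable k : nat.
Hypothesis Hk : (1 <= k <= N)%nat.

Definition gap_phase (d : nat) : R := INR d / INR (gap_width k).

Lemma gap_width_ge_9 : 9 <= INR (gap_width k).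
Proof.
  pose proof (gap_stage_lt k ltac:(lia)). unfold gap_width.
  rewrite pow_INR. replace (INR 3) with 3 by (simpl; ring).
  replace (K - S (gap_stage k))%nat with (2 + (K - S (gap_stage k) - 2))%nat by lia.
  rewrite pow_add. pose proof (pow_R1_Rle 3 (K - S (gap_stage k) - 2) ltac:(lra)). lra.
Qed.

Lemma gap_phase_S d : gap_phase (S d) = gap_phase d + / INR (gap_width k).
Proof. pose proof gap_width_ge_9. unfold gap_phase. rewrite S_INR. field. lra. Qed.

Lemma gap_phase_le d d' : (d <= d')%nat -> gap_phase d <= gap_phase d'.
Proof.
  intros. pose proof gap_width_ge_9. unfold gap_phase, Rdiv.
  apply Rmult_le_compat_r; [left; apply Rinv_0_lt_compat; lra|apply le_INR; auto].
Qed.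

Lemma gap_phase_0 : gap_phase 0 = 0.
Proof. unfold gap_phase. simpl. lra. Qed.

Lemma gap_phase_width : gap_phase (gap_width k) = 1.
Proof. pose proof gap_width_ge_9. unfold gap_phase. field. lra. Qed.

Lemma gap_phase_open d : (0 < d < gap_width k)%nat -> 0 < gap_phase d < 1.
Proof.
  intros Hd. pose proof gap_width_ge_9. rewrite <- gap_phase_width. unfold gap_phase. split.
  - apply Rdiv_lt_0_compat; [apply lt_0_INR|]; lia || lra.
  - unfold Rdiv. apply Rmult_lt_compat_r; [apply Rinv_0_lt_compat; lra|apply lt_INR; lia].
Qed.

Lemma gap_phase_quarters : exists d1 d2, (1 <= d1)%nat /\ (S d1 <= d2)%nat /\
  (S d2 < gap_width k)%nat /\ gap_phase d1 < / 4 /\ / 4 <= gap_phase (S d1) /\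
  gap_phase d2 <= 3 / 4 /\ 3 / 4 < gap_phase (S d2).
Proof.
  pose proof gap_width_ge_9 as HE9.
  pose proof gap_phase_0 as Hph0. pose proof gap_phase_width as HphE. pose proof gap_phase_S as HS.
  set (E := gap_width k) in *.
  assert (HiE : / INR E <= / 9) by (apply Rinv_le_contravar; lra).
  destruct (nat_crossing (fun d => gap_phase d < / 4) 0 E ltac:(lia) ltac:(simpl; lra)
              ltac:(simpl; fold E; lra)) as [d1 [Hd1 [P1 NP1]]].
  cbv beta in P1, NP1. rewrite HS in NP1.
  assert (Hd1' : (1 <= d1)%nat) by (destruct d1; [exfalso; lra|lia]).
  destruct (nat_crossing (fun d => gap_phase d <= 3 / 4) (S d1) E ltac:(lia)
              ltac:(simpl; rewrite HS; lra) ltac:(simpl; fold E; lra)) as [d2 [Hd2 [P2 NP2]]].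
  cbv beta in P2, NP2. rewrite HS in NP2.
  exists d1, d2. rewrite !HS. repeat split; auto; try lra; try lia.
  destruct (Nat.eq_dec (S d2) E) as [Heq|]; [|lia]. exfalso. rewrite <- Heq, HS in HphE. lra.
Qed.

Variable ia : nat.
Hypothesis Ha : grid_pt ia = a_k k.
Hypothesis Hb : grid_pt (ia + gap_width k) = b_k k.
Hypothesis HM : (ia + gap_width k <= grid_size)%nat.

Lemma g_loop_gap_grid d : (0 < d < gap_width k)%nat ->
  g_loop (grid_pt (ia + d)) = circ_pt k (gap_phase d - / 4).
Proof.
  intros Hd. pose proof (gap_phase_open d Hd). pose proof (a_k_lt_b_k k).
  assert (Hpt : grid_pt (ia + d) = a_k k + gap_phase d * (b_k k - a_k k)).
  { rewrite <- Ha, <- Hb. pose proof gap_width_ge_9. unfold grid_pt, gap_phase.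
    rewrite !plus_INR. field. lra. }
  rewrite (g_loop_in_gap k) by (try lia; rewrite Hpt; split; nra).
  rewrite Hpt. do 2 f_equal. field. lra.
Qed.

Lemma star_g_vertex_gap d d' : (d <= gap_width k)%nat -> (0 < d' < gap_width k)%nat ->
  (d' <= S d)%nat -> (d <= S d')%nat -> star N (g_vertex (ia + d)) (circ_pt k (gap_phase d' - / 4)).
Proof. intros. rewrite <- g_loop_gap_grid by lia. apply star_g_vertex; lia. Qed.

Lemma g_vertex_gap_ends : g_vertex ia = V0 /\ g_vertex (ia + gap_width k) = V0.
Proof.
  split; apply at_rest_V0; try lia; [apply (at_rest_a_k k)|apply (at_rest_b_k k)]; auto; lia.
Qed.

Lemma g_vertex_gap_pattern : exists d1 d2,
  (S d1 <= d2 <= gap_width k)%nat /\ g_vertex (ia + S d1) = VR k /\ g_vertex (ia + d2) = VL k /\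
  (forall d, (d <= S d1)%nat -> g_vertex (ia + d) = V0 \/ g_vertex (ia + d) = VR k) /\
  (forall d, (S d1 <= d <= d2)%nat -> g_vertex (ia + d) = VR k \/ g_vertex (ia + d) = VL k) /\
  (forall d, (d2 <= d <= gap_width k)%nat -> g_vertex (ia + d) = V0 \/ g_vertex (ia + d) = VL k).
Proof.
  destruct g_vertex_gap_ends as [W0 WE].
  destruct gap_phase_quarters as (d1 & d2 & Hd1 & Hd12 & Hd2 & P1 & Q1 & P2 & Q2).
  set (E := gap_width k) in *.
  assert (Mid : forall d, (S d1 <= d <= d2)%nat ->
                 g_vertex (ia + d) = VR k \/ g_vertex (ia + d) = VL k).
  { intros d Hd. apply (star_circ_pt_middle N k (gap_phase d)); auto.
    - pose proof (gap_phase_le (S d1) d ltac:(lia)). pose proof (gap_phase_le d d2 ltac:(lia)). lra.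
    - apply star_g_vertex_gap; lia. }
  assert (W1 : g_vertex (ia + S d1) = VR k).
  { destruct (Mid (S d1) ltac:(lia)) as [|A1]; auto.
    destruct (star_circ_pt_first_quarter N k (gap_phase d1) (g_vertex (ia + S d1))) as [A2|A2];
      auto; try congruence.
    - pose proof (gap_phase_open d1 ltac:(lia)). lra.
    - apply star_g_vertex_gap; lia. }
  assert (W2 : g_vertex (ia + d2) = VL k).
  { destruct (Mid d2 ltac:(lia)) as [A1|]; auto.
    destruct (star_circ_pt_last_quarter N k (gap_phase (S d2)) (g_vertex (ia + d2))) as [A2|A2];
      auto; try congruence.
    - pose proof (gap_phase_open (S d2) ltac:(lia)). lra.
    - apply star_g_vertex_gap; lia. }
  exists d1, d2. repeat split; auto; try lia.
  - intros d Hd. destruct (Nat.eq_dec d 0) as [->|]; [rewrite Nat.add_0_r; auto|].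
    destruct (Nat.eq_dec d (S d1)) as [->|]; auto.
    apply (star_circ_pt_first_quarter N k (gap_phase d)); auto.
    + pose proof (gap_phase_open d ltac:(lia)). pose proof (gap_phase_le d d1 ltac:(lia)). lra.
    + apply star_g_vertex_gap; lia.
  - intros d Hd. destruct (Nat.eq_dec d d2) as [->|]; auto.
    destruct (Nat.eq_dec d E) as [->|]; auto.
    apply (star_circ_pt_last_quarter N k (gap_phase d)); auto.
    + pose proof (gap_phase_open d ltac:(lia)). pose proof (gap_phase_le (S d2) d ltac:(lia)).
      lra.
    + apply star_g_vertex_gap; lia.
Qed.

(* Unless the triangle of [C_k] is being traversed backwards, crossing the
   gap pushes it onto the stack of [g]. *)
Lemma g_stack_across_gap r : g_stack ia = V0 :: r -> (forall r', r <> VR k :: r') ->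
  g_stack (ia + gap_width k) = V0 :: VL k :: VR k :: V0 :: r.
Proof.
  intros Hr Hnr. destruct g_vertex_gap_ends as [W0 WE].
  destruct g_vertex_gap_pattern as (d1 & d2 & Hd & W1 & W2 & M1 & M2 & M3).
  assert (Hedge : forall a b p q, (p <= q)%nat ->
            (forall d, (p <= d <= q)%nat -> g_vertex (ia + d) = a \/ g_vertex (ia + d) = b) ->
            g_stack (ia + q) = push (g_stack (ia + p)) (g_vertex (ia + q))).
  { intros a b p q Hpq Hab. apply (stack_within_edge _ _ _ a b); [lia|].
    intros i Hi. replace i with (ia + (i - ia))%nat by lia. apply Hab. lia. }
  rewrite (Hedge V0 (VL k) d2 (gap_width k)), WE by (auto; lia).
  rewrite (Hedge (VR k) (VL k) (S d1) d2), W2 by (auto; lia).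
  rewrite (Hedge V0 (VR k) 0%nat (S d1)), W1, Nat.add_0_r, Hr by (lia || intros; apply M1; lia).
  assert (T1 : push (V0 :: r) (VR k) = VR k :: V0 :: r).
  { destruct r as [|u r']; unfold push; destruct (vertex_eq_dec (VR k) V0); try discriminate; auto.
    destruct (vertex_eq_dec (VR k) u); auto. subst. exfalso; apply (Hnr r'); auto. }
  rewrite T1. unfold push.
  destruct (vertex_eq_dec (VL k) (VR k)); [discriminate|].
  destruct (vertex_eq_dec (VL k) V0); [discriminate|].
  destruct (vertex_eq_dec V0 (VL k)); [discriminate|].
  destruct (vertex_eq_dec V0 (VR k)); [discriminate|].
  reflexivity.
Qed.

End Gap.

Lemma g_stack_step j : (0 < j <= grid_size)%nat -> at_rest j ->
  (at_rest (j - 1) /\ g_stack j = g_stack (j - 1)) \/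
  (exists k ia, (1 <= k <= N)%nat /\ grid_pt ia = a_k k /\ (ia + gap_width k)%nat = j /\
     grid_pt j = b_k k /\ (forall i, (ia < i < j)%nat -> ~ at_rest i) /\
     (forall r, g_stack ia = V0 :: r -> (forall r', r <> VR k :: r') ->
        g_stack j = V0 :: VL k :: VR k :: g_stack ia)).
Proof.
  intros Hj Hr. destruct (classic (at_rest (j - 1))) as [Hr1|Hr1].
  - left. split; auto. unfold g_stack. replace j with (S (j - 1)) at 1 by lia.
    rewrite stack_S. replace (S (j - 1)) with j by lia.
    destruct (stack_top g_vertex (j - 1)) as [r Er].
    rewrite Er, (at_rest_V0 j), (at_rest_V0 (j - 1)) by (auto; lia). apply push_top_id.
  - right. apply not_all_ex_not in Hr1 as [k Hk].
    apply imply_to_and in Hk as [Hk Hg]. apply NNPP in Hg.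
    destruct (gap_on_grid k Hk) as [ia [Ha [Hb HM]]].
    assert (Hl : (ia < j - 1)%nat) by (apply grid_pt_lt_inv; lra).
    assert (Hu1 : (j - 1 < ia + gap_width k)%nat) by (apply grid_pt_lt_inv; lra).
    assert (Ej : (ia + gap_width k)%nat = j).
    { enough (ia + gap_width k <= j)%nat by lia.
      apply grid_pt_le_inv. rewrite Hb. destruct (Rle_dec (b_k k) (grid_pt j)); auto. exfalso.
      apply (Hr k Hk). split; [|lra]. pose proof (grid_pt_lt (j - 1) j ltac:(lia)). lra. }
    exists k, ia. do 3 (split; auto). split; [rewrite <- Ej; auto|]. split.
    + intros i Hi Hri. apply (Hri k Hk).
      split; [rewrite <- Ha|rewrite <- Hb]; apply grid_pt_lt; lia.
    + intros r Hsr Hnr. rewrite Hsr, <- Ej. apply g_stack_across_gap; auto; congruence.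
Qed.

(* The stack of [g] is [V0] followed by the triangles of the gaps of index at
   most [N] already crossed, the last crossed on top. *)
Lemma g_stack_shape j : (j <= grid_size)%nat -> at_rest j ->
  g_stack j = [V0] \/ exists k r, (1 <= k <= N)%nat /\ b_k k <= grid_pt j /\
    g_stack j = V0 :: VL k :: VR k :: r.
Proof.
  induction j as [j IH] using lt_wf_ind. intros Hj Hr.
  destruct (Nat.eq_dec j 0) as [->|Hj0].
  { left. unfold g_stack. simpl. rewrite (at_rest_V0 0); auto; lia. }
  destruct (g_stack_step j ltac:(lia) Hr) as [[Hr1 E]|[k [ia [Hk [Ha [Ej [Hb [Hni Hblk]]]]]]]].
  - rewrite E. destruct (IH (j - 1)%nat ltac:(lia) ltac:(lia) Hr1) as [|[k [r [Hk [Hb E2]]]]]; auto.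
    right. exists k, r. repeat split; auto; try lia.
    pose proof (grid_pt_le (j-1) j ltac:(lia)). lra.
  - right. assert (Hria : at_rest ia) by (apply (at_rest_a_k k); auto; lia).
    pose proof (gap_width_pos k).
    exists k, (g_stack ia). repeat split; auto; try lia; [lra|].
    destruct (IH ia ltac:(lia) ltac:(lia) Hria) as [E|[k' [r [_ [_ E]]]]];
      [apply Hblk with (r := [])|apply Hblk with (r := VL k' :: VR k' :: r)];
      auto; intros r' C; discriminate.
Qed.

Lemma g_stack_head j : (j <= grid_size)%nat -> at_rest j ->
  exists r, g_stack j = V0 :: r /\ forall k r', r <> VR k :: r'.
Proof.
  intros Hj Hr. destruct (g_stack_shape j Hj Hr) as [E|[k [r [_ [_ E]]]]].
  - exists []. split; auto. intros; discriminate.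
  - exists (VL k :: VR k :: r). split; auto. intros; discriminate.
Qed.

Lemma g_stack_suffix j' : forall j, (j <= j' <= grid_size)%nat -> at_rest j -> at_rest j' ->
  is_suffix (g_stack j) (g_stack j') /\
  (g_stack j <> g_stack j' -> exists k, (1 <= k <= N)%nat /\ grid_pt j <= a_k k /\
     is_suffix (VR k :: g_stack j) (g_stack j')).
Proof.
  induction j' as [j' IH] using lt_wf_ind. intros j Hjj Hr Hr'.
  destruct (Nat.eq_dec j j') as [->|Hne].
  { split; [apply is_suffix_refl|]. intros C; exfalso; auto. }
  destruct (g_stack_step j' ltac:(lia) Hr') as [[Hr1 E]|[k [ia [Hk [Ha [Ej [Hb [Hni Hblk]]]]]]]].
  { rewrite E. apply IH; auto; lia. }
  assert (Hria : at_rest ia) by (apply (at_rest_a_k k); auto; lia).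
  pose proof (gap_width_pos k).
  assert (Hjia : (j <= ia)%nat).
  { destruct (le_lt_dec j ia); auto. exfalso. apply (Hni j); auto. lia. }
  destruct (g_stack_head ia ltac:(lia) Hria) as [r [Er Hnr]].
  rewrite (Hblk r) by auto.
  destruct (IH ia ltac:(lia) j ltac:(lia) Hr Hria) as [Hs1 Hs2]. split.
  - do 3 apply is_suffix_cons. auto.
  - intros _. destruct (classic (g_stack j = g_stack ia)) as [Eq|Neq].
    + exists k. repeat split; auto; try lia.
      * rewrite <- Ha. apply grid_pt_le; auto.
      * rewrite Eq. do 2 apply is_suffix_cons. apply is_suffix_refl.
    + destruct (Hs2 Neq) as [k' [Hk' [Hle Hs]]]. exists k'. repeat split; auto; try lia.
      do 3 apply is_suffix_cons. auto.
Qed.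

Lemma f_stack_last : f_stack grid_size = g_stack grid_size.
Proof. apply grid_stack_invariant. Qed.

Lemma g_stack_final_suffix i : (i <= grid_size)%nat -> at_rest i ->
  is_suffix (g_stack i) (f_stack grid_size).
Proof. intros. rewrite f_stack_last. apply g_stack_suffix; auto using at_rest_last. Qed.

Lemma grid_floor_at_rest be i : grid_floor (cantor_point be) i -> at_rest i.
Proof.
  intros [Hi [Hix Hmax]] k Hk Hg.
  pose proof (cantor_point_not_in_gap be k ltac:(lia)) as Hng.
  assert (Hb : b_k k <= cantor_point be)
    by (destruct (Rle_dec (b_k k) (cantor_point be)); auto; exfalso; apply Hng; lra).
  destruct (gap_on_grid k Hk) as [ia [Ha [Hb' HM]]].
  specialize (Hmax _ HM ltac:(lra)).
  assert (Hlt : (i < ia + gap_width k)%nat) by (apply grid_pt_lt_inv; lra). lia.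
Qed.

Lemma zero_between_vertices i1 i2 k k' : (i1 <= i2 <= grid_size)%nat -> k <> k' ->
  f_vertex i1 = VL k -> f_vertex i2 = VR k' ->
  exists t, grid_pt i1 <= t <= grid_pt i2 /\ f t = origin.
Proof.
  intros Hi Hkk W1 W2.
  pose proof (star_f_vertex_here i1 ltac:(lia)) as St1. rewrite W1 in St1.
  pose proof (star_f_vertex_here i2 ltac:(lia)) as St2. rewrite W2 in St2.
  pose proof (star_VL_not_origin N k _ St1). pose proof (star_VR_not_origin N k' _ St2).
  destruct St1 as [Hk1 [Hc1 _]], St2 as [Hk2 [Hc2 _]].
  destruct (grid_pt_unit i1 ltac:(lia)), (grid_pt_unit i2 ltac:(lia)).
  apply (loop_zero_between_circles f _ _ k k' f_cont f_hawaiian); auto; try lia.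
  apply grid_pt_le; lia.
Qed.

(* A zero of [f] lying after the stack of [f] first reaches the stack of [g]
   at [i], and before that stack is first extended by some [VR k]. *)
Definition bracketed_zero (i : nat) (t : R) : Prop :=
  unit_I t /\ f t = origin /\
  (forall i0, first_hit f_vertex (g_stack i) i0 -> g_stack i <> [V0] -> grid_pt (i0 - 1) <= t) /\
  (forall k i2, is_suffix (VR k :: g_stack i) (f_stack grid_size) ->
     first_hit f_vertex (VR k :: g_stack i) i2 -> t <= grid_pt i2).

Lemma bracketed_zero_exists i : (i <= grid_size)%nat -> at_rest i -> exists t, bracketed_zero i t.
Proof.
  intros Hi Hr. set (P := g_stack i).
  assert (HPS : is_suffix P (f_stack grid_size)) by (apply g_stack_final_suffix; auto).
  destruct (classic (P = [V0])) as [E0|N0].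
  { exists 0. repeat split; try lra; [apply f_zero|contradiction|].
    intros k i2 _ _. apply grid_pt_nonneg. }
  destruct (first_hit_exists f_vertex grid_size P HPS (stack_nonempty _ _)) as [i0 [Hi0 Hf0]].
  destruct (classic (exists k', is_suffix (VR k' :: P) (f_stack grid_size))) as [[k' Hk']|Nk].
  2:{ exists 1. repeat split; try lra; [apply f_one| |intros k i2 C; exfalso; eauto].
      intros i0' Hf0' _. rewrite (first_hit_unique _ _ _ _ Hf0' Hf0), <- grid_pt_last.
      apply grid_pt_le. lia. }
  destruct (g_stack_shape i Hi Hr) as [C|[k [r [Hk [Hbk EP]]]]]; [contradiction|]. fold P in EP.
  (* [k'] is the first gap of index at most [N] to the right of [i]. *)
  destruct (g_stack_suffix grid_size i ltac:(lia) Hr at_rest_last) as [_ Hgb].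
  destruct Hgb as [k'' [Hk'' [Hsa Hs'']]].
  { rewrite <- f_stack_last. intros C. pose proof (is_suffix_length _ _ Hk') as Hlen.
    rewrite <- C in Hlen. unfold P in Hlen. simpl in Hlen. lia. }
  rewrite <- f_stack_last in Hs''. fold P in Hs''.
  assert (k'' = k') by (pose proof (is_suffix_head_unique _ _ _ _ Hs'' Hk') as E; now inversion E).
  subst k''.
  destruct (first_hit_cons f_vertex V0 (VL k :: VR k :: r) i0 ltac:(rewrite <- EP; auto)
              ltac:(discriminate)) as [i1 [Ei0 [Hs1 _]]].
  destruct (first_hit_exists f_vertex grid_size (VR k' :: P) Hk' ltac:(discriminate))
    as [i2 [Hi2 Hf2]].
  destruct (first_hit_cons f_vertex (VR k') P i2 Hf2 (stack_nonempty _ _)) as [i3 [Ei2 [_ W2]]].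
  assert (Hle02 : (i0 <= i2)%nat).
  { apply (first_hit_before f_vertex P (VR k' :: P) i0 i2 Hf0); [apply Hf2| |apply stack_nonempty].
    exists [VR k']; reflexivity. }
  assert (Hkk : k <> k') by (intros ->; pose proof (a_k_lt_b_k k'); lra).
  destruct (zero_between_vertices i1 i2 k k') as [t [Ht Hft]]; auto; try lia.
  { now apply stack_top_vertex in Hs1. }
  exists t. destruct (grid_pt_unit i1 ltac:(lia)), (grid_pt_unit i2 ltac:(lia)).
  repeat split; auto; try lra.
  - intros i0' Hf0' _. rewrite (first_hit_unique _ _ _ _ Hf0' Hf0), Ei0.
    simpl. rewrite Nat.sub_0_r. lra.
  - intros k0 i2' Hsk Hf2'.
    assert (k0 = k') by (pose proof (is_suffix_head_unique _ _ _ _ Hsk Hk') as E; now inversion E).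
    subst k0. rewrite (first_hit_unique _ _ _ _ Hf2' Hf2). lra.
Qed.

Lemma f_high_at_VR_VL j m : (S j <= grid_size)%nat -> f_vertex j = VR m -> f_vertex (S j) = VL m ->
  snd (f (grid_pt (S j))) > / INR m.
Proof.
  intros Hj W1 W2. apply (star_VR_VL_high N).
  - rewrite <- W1. apply star_f_vertex; [lia|apply grid_pt_unit; lia|apply grid_pt_close; lia].
  - rewrite <- W2. apply star_f_vertex_here. lia.
Qed.

Lemma bracketed_zero_before_hit i t Q j : (i <= grid_size)%nat -> at_rest i -> bracketed_zero i t ->
  is_suffix Q (f_stack grid_size) -> (length (g_stack i) < length Q)%nat ->
  first_hit f_vertex Q j -> t <= grid_pt j.
Proof.
  intros Hi Hr [_ [_ [_ Ht]]] HQ Hlen Hj.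
  assert (Hne : g_stack i <> g_stack grid_size).
  { rewrite <- f_stack_last. intros C.
    pose proof (is_suffix_length _ _ HQ). rewrite <- C in *. lia. }
  destruct (proj2 (g_stack_suffix grid_size i ltac:(lia) Hr at_rest_last) Hne) as [k [_ [_ Hs]]].
  rewrite <- f_stack_last in Hs.
  destruct (first_hit_exists f_vertex grid_size _ Hs ltac:(discriminate)) as [i2 [_ Hf2]].
  specialize (Ht k i2 Hs Hf2).
  assert (Hsub : is_suffix (VR k :: g_stack i) Q)
    by (apply (is_suffix_common _ _ (f_stack grid_size)); auto; simpl; lia).
  assert (Hle : (i2 <= j)%nat)
    by (apply (first_hit_before f_vertex _ Q i2 j Hf2); [apply Hj|auto|discriminate]).
  apply grid_pt_le in Hle. lra.
Qed.

Lemma hit_before_bracketed_zero i t Q j : (i <= grid_size)%nat -> at_rest i -> bracketed_zero i t ->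
  is_suffix Q (g_stack i) -> (length Q < length (g_stack i))%nat -> Q <> [] ->
  first_hit f_vertex Q j -> grid_pt j <= t.
Proof.
  intros Hi Hr [_ [_ [Ht _]]] HQ Hlen HQ0 Hj.
  assert (Hne : g_stack i <> [V0]).
  { intros C. rewrite C in Hlen. destruct Q; simpl in Hlen; [congruence|lia]. }
  destruct (first_hit_exists f_vertex grid_size (g_stack i) (g_stack_final_suffix i Hi Hr)
              (stack_nonempty _ _)) as [i3 [_ Hf3]].
  specialize (Ht i3 Hf3 Hne).
  assert (Hle : (j <= i3)%nat)
    by (apply (first_hit_before f_vertex Q (g_stack i) j i3 Hj); auto; apply Hf3).
  assert (Hneq : j <> i3).
  { intros ->. destruct Hj as [Hj _], Hf3 as [Hf3 _]. rewrite Hj in Hf3. rewrite Hf3 in Hlen. lia. }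
  pose proof (grid_pt_le j (i3 - 1) ltac:(lia)). lra.
Qed.

(* The stack of [f] must push the triangle of the gap [m] between the two
   bracketing intervals, and [f] is high on [C_m] at that moment. *)
Lemma bracketed_zeros_apart be be' m i i' t t' : (1 <= m <= N)%nat ->
  cantor_point be <= a_k m -> b_k m <= cantor_point be' ->
  grid_floor (cantor_point be) i -> grid_floor (cantor_point be') i' ->
  bracketed_zero i t -> bracketed_zero i' t' -> t + modulus m <= t'.
Proof.
  intros Hm Hx Hx' Hi Hi' Ht Ht'.
  pose proof (grid_floor_at_rest be i Hi) as Hri.
  pose proof (grid_floor_at_rest be' i' Hi') as Hri'.
  destruct Hi as [HiM [Hix _]], Hi' as [Hi'M [Hix' Hi'max]].
  destruct (gap_on_grid m Hm) as [ia [Ha [Hb HM]]].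
  set (ib := (ia + gap_width m)%nat) in *.
  assert (Hria : at_rest ia) by (apply (at_rest_a_k m); auto; lia).
  assert (Hrib : at_rest ib) by (apply (at_rest_b_k m); auto; lia).
  assert (Hiia : (i <= ia)%nat) by (apply grid_pt_le_inv; lra).
  assert (Hibi : (ib <= i')%nat) by (apply Hi'max; auto; lra).
  destruct (g_stack_head ia ltac:(lia) Hria) as [r [Er Hnr]].
  set (QL := VL m :: VR m :: g_stack ia).
  assert (Eib : g_stack ib = V0 :: QL)
    by (unfold ib, QL; rewrite Er; apply g_stack_across_gap; auto).
  assert (S1 : is_suffix (g_stack i) (g_stack ia)) by (apply (g_stack_suffix ia i); auto; lia).
  assert (S2 : is_suffix (V0 :: QL) (g_stack i'))
    by (rewrite <- Eib; apply (g_stack_suffix i' ib); auto; lia).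
  assert (SQL : is_suffix QL (g_stack i'))
    by (apply (is_suffix_trans _ (V0 :: QL)); auto; exists [V0]; reflexivity).
  assert (SQLS : is_suffix QL (f_stack grid_size))
    by (apply (is_suffix_trans _ (g_stack i')); auto; apply g_stack_final_suffix; auto; lia).
  destruct (first_hit_exists f_vertex grid_size QL SQLS ltac:(discriminate)) as [ib0 [Hib0 Hfb]].
  destruct (first_hit_cons f_vertex (VL m) (VR m :: g_stack ia) ib0 Hfb ltac:(discriminate))
    as [ib1 [Eb0 [Sb1 Wb0]]].
  assert (Hhigh : snd (f (grid_pt ib0)) > / INR m).
  { subst ib0. apply f_high_at_VR_VL; auto. now apply stack_top_vertex in Sb1. }
  assert (Ht1 : t <= grid_pt ib0).
  { apply (bracketed_zero_before_hit i t QL ib0); auto; try lia.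
    apply is_suffix_length in S1. unfold QL. simpl. lia. }
  assert (Ht2 : grid_pt ib0 <= t').
  { apply (hit_before_bracketed_zero i' t' QL ib0); auto; try lia; try discriminate.
    apply is_suffix_length in S2. unfold QL in *. simpl in *. lia. }
  destruct Ht as [HtI [Hft _]].
  pose proof (modulus_zero_far m (grid_pt ib0) t ltac:(lia) (grid_pt_unit ib0 Hib0) HtI Hft Hhigh).
  rewrite Rabs_right in * by lra. lra.
Qed.

End Grid.

Lemma zeros_for_level N : (1 <= N)%nat -> exists T : (nat -> bool) -> R,
  (forall be, unit_I (T be) /\ f (T be) = origin) /\
  (forall be be' m, (1 <= m <= N)%nat -> cantor_point be <= a_k m -> b_k m <= cantor_point be' ->
     T be + modulus m <= T be').
Proof.
  intros HN.
  destruct (star_lebesgue_number N HN) as [L [HL HLeb]].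
  destruct (choice (fun z v => hawaiian z ->
              forall z', hawaiian z' -> dist2 z' z < L -> star N v z')) as [vc Hvc].
  { intros z. destruct (classic (hawaiian z)) as [Hz|Hz].
    - destruct (HLeb z Hz) as [v Hv]. eauto.
    - exists V0. tauto. }
  destruct (cont_on_I2_uniform H HH L HL) as [rho [Hrho Hu]].
  destruct (inv_pow3_small rho Hrho) as [K0 HK0].
  set (K := Nat.max K0 (N + 2)).
  assert (HK : (N + 2 <= K)%nat) by (unfold K; lia).
  assert (HKr : / 3 ^ K < rho).
  { eapply Rle_lt_trans; [|exact HK0].
    apply Rinv_le_contravar; [apply pow3_pos|apply Rle_pow; [lra|unfold K; lia]]. }
  destruct (choice (fun be t => exists i, grid_floor K (cantor_point be) i /\
                                       bracketed_zero K vc i t)) as [T HT].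
  { intros be.
    destruct (grid_floor_exists K (cantor_point be) (cantor_point_unit be)) as [i Hi].
    destruct (bracketed_zero_exists K rho HKr N HK L HL vc Hvc Hu i (proj1 Hi)
                (grid_floor_at_rest K N HK be i Hi)) as [t Ht].
    eauto. }
  exists T. split.
  - intros be. destruct (HT be) as [i [_ [? [? _]]]]. auto.
  - intros be be' m Hm Hx Hx'. destruct (HT be) as [i [Hi Ht]], (HT be') as [i' [Hi' Ht']].
    eapply (bracketed_zeros_apart K rho HKr N HK L HL vc Hvc Hu be be' m i i'); eauto.
Qed.

(* The zeros at the levels [N] are separated by [modulus m] for all [N >= m];
   their [limsup] keeps both the separation and the value [0]. *)
Lemma fibre_origin_large : card_ge_c (fibre f origin).
Proof.
  destruct (choice (fun n T => (forall be, unit_I (T be) /\ f (T be) = origin) /\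
       (forall be be' m, (1 <= m <= S n)%nat -> cantor_point be <= a_k m ->
          b_k m <= cantor_point be' -> T be + modulus m <= T be')))
    as [Tn Tn_spec].
  { intros n. apply zeros_for_level. lia. }
  assert (HuT : forall be n, 0 <= Tn n be <= 1) by (intros be n; apply (proj1 (Tn_spec n) be)).
  set (T := fun be => limsup (fun n => Tn n be) (HuT be)).
  assert (fT : forall be, unit_I (T be) /\ f (T be) = origin).
  { intros be. split; [apply limsup_unit|].
    apply (limsup_closed _ (HuT be) (fun x => f x = origin)); [|intros n; apply Tn_spec].
    intros x Hx Hne.
    assert (Hd : 0 < dist2 (f x) origin).
    { destruct (dist2_pos (f x) origin) as [|E]; auto. exfalso. apply Hne, dist2_eq0. auto. }
    destruct (f_cont x Hx _ Hd) as [del [Hdel Hc]]. exists del. split; auto.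
    intros y Hy Hyx Hfy. specialize (Hc y Hy Hyx). rewrite Hfy, dist2_sym in Hc. lra. }
  assert (Tlt : forall be be' i0, be i0 = false -> be' i0 = true ->
                  (forall j, (j < i0)%nat -> be j = be' j) -> T be < T be').
  { intros be be' i0 H1 H2 Hag.
    destruct (gap_between_cantor_points be be' i0 Hag H1 H2) as [k [Hk [Hx Hx']]].
    assert (T be + modulus k <= T be').
    { apply (limsup_le_shift _ _ (HuT be) (HuT be') (modulus k) k).
      intros n Hn. apply (proj2 (Tn_spec n)); auto; lia. }
    pose proof (proj1 (modulus_spec k)). lra. }
  assert (Tinj : forall be be', (exists i, be i <> be' i) -> T be <> T be').
  { intros be be' Hd. destruct (first_difference be be' Hd) as [i0 [Hi0 Hag]].
    destruct (be i0) eqn:E1, (be' i0) eqn:E2; try congruence.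
    - pose proof (Tlt be' be i0 E2 E1 (fun j Hj => eq_sym (Hag j Hj))). lra.
    - pose proof (Tlt be be' i0 E1 E2 Hag). lra. }
  exists (fun r => T (real_code r)). split; [intros r; apply fT|].
  intros r1 r2 Heq. apply NNPP. intros Hne.
  exact (Tinj _ _ (real_code_injective r1 r2 Hne) Heq).
Qed.

End Homotopy.

Theorem lemma7p9 (f : R -> pt) :
  loop_in_X f -> homotopic_rel f g_loop ->
  card_ge_c (fibre f origin) /\ ~ c_loop f.
Proof.
  intros Hf [H [HH [Hhaw [H0 [H1 Hend]]]]].
  assert (C : card_ge_c (fibre f origin)) by (eapply fibre_origin_large; eauto).
  split; auto. intros [_ Hc]. exact (Hc origin C).
Qed.
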